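(* Let $\gamma>1$ be a real number such that $\gamma\ne\psi_L^r$ for every $r\in\mathbb{Q}$ and every admissible tuple $L$, where $\psi_L$ is the dominant zero associated with $L$. Let $K_n=\lfloor\gamma^n\rfloor$. Then $K$ satisfies absolute Benford's Law.
   Context: An admissible tuple is $L=(a_1,\dots,a_N)\in\mathbb{N}_0^N$ with $N\ge2$, $a_1>0$; $\psi_L$ is the unique positive real zero of $x^N-\sum_{k=1}^{N-1}a_kx^{N-k}-(1+a_N)$ and $\theta=\psi_L^{-1}$. For such $L$: $\Theta=(a_1,\dots,a_N,a_1,\dots,a_N,\dots)$; $\mathcal H^\circ$ is the set of finite tuples $\epsilon$ (length $n$, empty tuple included) such that either $\epsilon=\Theta|n$ or there is $0\le s<n$ with $(\epsilon(1),\dots,\epsilon(s))=\Theta|s$, $\epsilon(s+1)<\Theta(s+1)$ and $(\epsilon(s+2),\dots,\epsilon(n))\in\mathcal H^\circ$; $\mathcal H=\{\epsilon\in\mathcal H^\circ:\epsilon(1)>0\}$. $H$: $H_n=1+\sum_{k=1}^{n-1}a_kH_{n-k}$ ($1\le n\le N+1$), $H_{n+N}=a_1H_{n+N-1}+\dots+a_{N-1}H_{n+1}+(1+a_N)H_n$; each $m\in\mathbb{N}$ is uniquely $m=\sum_{k=1}^M\epsilon(k)H_{M-k+1}$ with $\epsilon\in\mathcal H$ of length $M$. $\mathrm{LB}_s(m)$ is $(\epsilon(1),\dots,\epsilon(s))$ if $N\le s\le M$, $(\epsilon(1),\dots,\epsilon(s),0,\dots,0)$ (length $N$) if $s<N$,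 $s\le M$, undefined if $s>M$. $\mathcal H_s$: the set of values of $\mathrm{LB}_s$, listed $\mathbf b_1,\dots,\mathbf b_\ell$ lexicographically; exclusive block $\mathbf b_{\ell+1}$: if $s\ge N$, $s\equiv p\pmod N$, $0\le p<N$, its first $s-p$ entries are $\Theta|(s-p)$ with the last of these replaced by $1+a_N$ and its last $p$ entries are $0$; if $s<N$, $\mathbf b_{\ell+1}=(a_1,\dots,a_{N-1},1+a_N)$; $\widetilde{\mathbf b_k}=\mathbf b_{k+1}$; $\mathbf b\cdot\widehat H=\sum_k\mathbf b(k)\theta^{k-1}$. $K$ satisfies strong Benford's Law under $\mathcal H$-expansion if for all $s\in\mathbb{N}$ and $\mathbf b\in\mathcal H_s$, $\lim_n\#\{k\le n:\mathrm{LB}_s(K_k)=\mathbf b\}/n=\log_{\psi_L}(\widetilde{\mathbf b}\cdot\widehat H/\mathbf b\cdot\widehat H)$. $K$ satisfies absolute Benford's Law if it satisfies strong Benford's Law under $\mathcal H$-expansion for every admissible $L$. *)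

From Stdlib Require Import Reals Lra Lia List Arith ZArith QArith Qreals ClassicalEpsilon.
Import ListNotations.
Open Scope R_scope.

(* A tuple L = (a_1,...,a_N) is a list; a_k = nth (k-1) L 0 (1-indexed). *)
Definition acoef (L : list nat) (k : nat) : nat := nth (k - 1) L 0%nat.

Definition admissible (L : list nat) : Prop :=
  (2 <= length L)%nat /\ (0 < nth 0 L 0%nat)%nat.

Definition sumR (l : list R) : R := fold_right Rplus 0 l.

(* x is a positive real zero of x^N - sum_{k=1}^{N-1} a_k x^{N-k} - (1 + a_N);
   this zero is unique (psi_L). *)
Definition is_psi (L : list nat) (x : R) : Prop :=
  let N := length L in
  0 < x /\
  x ^ N - sumR (map (fun k => INR (acoef L k) * x ^ (N - k)) (seq 1 (N - 1)))
    - (1 + INR (acoef L N)) = 0.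

(* Theta = (a_1,...,a_N,a_1,...), 1-indexed: Theta(i) = a_{((i-1) mod N)+1} *)
Definition Theta (L : list nat) (i : nat) : nat :=
  nth ((i - 1) mod length L) L 0%nat.

Definition Theta_prefix (L : list nat) (n : nat) : list nat :=
  map (Theta L) (seq 1 n).

Inductive Hcirc (L : list nat) : list nat -> Prop :=
| Hc_prefix (n : nat) : Hcirc L (Theta_prefix L n)
| Hc_split (s c : nat) (rest : list nat) :
    (c < Theta L (s + 1))%nat -> Hcirc L rest ->
    Hcirc L (Theta_prefix L s ++ c :: rest).

Definition Hset (L : list nat) (eps : list nat) : Prop :=
  Hcirc L eps /\ (0 < hd 0%nat eps)%nat.

(* The sequence H_n, n >= 1. Given l = [H_1;...;H_{n-1}], next_H computes H_n. *)
Definition next_H (L : list nat) (l : list nat) : nat :=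
  let n := S (length l) in
  let N := length L in
  let h j := nth (j - 1) l 0%nat in
  if (n <=? N + 1)%nat then
    (1 + list_sum (map (fun k => (acoef L k * h (n - k))%nat) (seq 1 (n - 1))))%nat
  else
    (list_sum (map (fun k => (acoef L k * h (n - k))%nat) (seq 1 (N - 1)))
     + (1 + acoef L N) * h (n - N))%nat.

Fixpoint Hlist (L : list nat) (m : nat) : list nat :=
  match m with
  | O => []
  | S m' => let l := Hlist L m' in l ++ [next_H L l]
  end.

Definition Hn (L : list nat) (n : nat) : nat := nth (n - 1) (Hlist L n) 0%nat.

Definition Hvalue (L : list nat) (eps : list nat) : nat :=
  let M := length eps in
  list_sum (map (fun k => (nth (k - 1) eps 0%nat * Hn L (M - k + 1))%nat) (seq 1 M)).

Definition is_expansion (L : list nat) (m : nat) (eps : list nat) : Prop :=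
  Hset L eps /\ m = Hvalue L eps.

Definition LB (L : list nat) (s m : nat) (b : list nat) : Prop :=
  exists eps, is_expansion L m eps /\ (1 <= s <= length eps)%nat /\
    b = firstn s eps ++ repeat 0%nat (length L - s).

Definition Hs (L : list nat) (s : nat) (b : list nat) : Prop :=
  exists m, (1 <= m)%nat /\ LB L s m b.

Fixpoint lexlt (x y : list nat) : Prop :=
  match x, y with
  | a :: x', b :: y' => (a < b)%nat \/ (a = b /\ lexlt x' y')
  | _, _ => False
  end.

Definition excl_block (L : list nat) (s : nat) : list nat :=
  let N := length L in
  if (N <=? s)%nat then
    let p := (s mod N)%nat in
    removelast (Theta_prefix L (s - p)) ++ [S (acoef L N)] ++ repeat 0%nat p
  else removelast L ++ [S (acoef L N)].

Definition succ_block (L : list nat) (s : nat) (b b' : list nat) : Prop :=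
  (Hs L s b' /\ lexlt b b' /\ forall c, Hs L s c -> lexlt b c -> lexlt b' c \/ b' = c)
  \/ ((forall c, Hs L s c -> ~ lexlt b c) /\ b' = excl_block L s).

Definition dotH (theta : R) (b : list nat) : R :=
  sumR (map (fun k => INR (nth (k - 1) b 0%nat) * theta ^ (k - 1)) (seq 1 (length b))).

Definition indicator (P : Prop) : nat :=
  if excluded_middle_informative P then 1%nat else 0%nat.

Definition count_LB (L : list nat) (s : nat) (b : list nat) (K : nat -> nat) (n : nat) : nat :=
  list_sum (map (fun k => indicator (LB L s (K k) b)) (seq 1 n)).

Definition log_base (c x : R) : R := ln x / ln c.

Definition strong_benford (L : list nat) (psi : R) (K : nat -> nat) : Prop :=
  forall (s : nat) (b b' : list nat),
    (1 <= s)%nat -> Hs L s b -> succ_block L s b b' ->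
    Un_cv (fun n => INR (count_LB L s b K n) / INR n)
          (log_base psi (dotH (/ psi) b' / dotH (/ psi) b)).

Definition absolute_benford (K : nat -> nat) : Prop :=
  forall (L : list nat) (psi : R), admissible L -> is_psi L psi -> strong_benford L psi K.

Definition floor_nat (x : R) : nat := Z.to_nat (Int_part x).

From Stdlib Require Import Reals QArith Qreals List.
From Stdlib Require Import Lra Lia ZArith ClassicalEpsilon.
Import ListNotations.
Open Scope R_scope.

(* The H-expansion of m has length M with H_M <= m < H_(M+1), and H_n psi^(-n)
   tends to a constant c > 0: the normalised sequence obeys a renewal inequality that forces
   the minimum and the maximum over a sliding window to merge.  The leading block of m is b
   exactly when m lies between the values V_b(M) and V_b'(M) of the blocks b and b' padded
   with zeros, and ln V_b(M) = M ln psi + ln c + ln (b . H^) + o(1).  For m = floor(gamma^n)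
   this says that x_n = log_psi (gamma^n / c) lies modulo 1 in an interval of length
   log_psi (b' . H^ / b . H^), up to errors that vanish as n grows.  As log_psi gamma is
   irrational, n log_psi gamma is equidistributed modulo 1 (by Dirichlet's approximation
   theorem, short progressions of it wind about once around the circle), which yields the
   limiting frequency. *)

(** * Sums and limits *)

Lemma sumR_map_ext (f g : nat -> R) l : (forall x, In x l -> f x = g x) ->
  sumR (map f l) = sumR (map g l).
Proof. intros H. f_equal. apply map_ext_in. auto. Qed.

Lemma sumR_app l1 l2 : sumR (l1 ++ l2) = sumR l1 + sumR l2.
Proof. induction l1; simpl; [lra|]. rewrite IHl1. lra. Qed.

Lemma sumR_scale c (f : nat -> R) l : sumR (map (fun x => c * f x) l) = c * sumR (map f l).
Proof. induction l; simpl; [lra|]. rewrite IHl. lra. Qed.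

Lemma sumR_minus (f g : nat -> R) l :
  sumR (map (fun x => f x - g x) l) = sumR (map f l) - sumR (map g l).
Proof. induction l; simpl; [lra|]. rewrite IHl. lra. Qed.

Lemma sumR_nonneg (f : nat -> R) l : (forall x, In x l -> 0 <= f x) -> 0 <= sumR (map f l).
Proof.
  induction l; simpl; intros H; [lra|].
  assert (0 <= f a) by auto. assert (0 <= sumR (map f l)) by auto. lra.
Qed.

Lemma sumR_INR (f : nat -> nat) l : INR (list_sum (map f l)) = sumR (map (fun x => INR (f x)) l).
Proof. induction l; simpl; auto. rewrite plus_INR, IHl. reflexivity. Qed.

Lemma Rabs_le_bounds x e : Rabs x <= e -> - e <= x <= e.
Proof. unfold Rabs. destruct (Rcase_abs x); intros; lra. Qed.

Lemma Un_cv_const c : Un_cv (fun _ => c) c.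
Proof. intros e He. exists 0%nat. intros. unfold R_dist. rewrite Rminus_diag, Rabs_R0. lra. Qed.

Lemma Un_cv_ext (u v : nat -> R) l : (forall n, u n = v n) -> Un_cv u l -> Un_cv v l.
Proof. intros E H e He. destruct (H e He) as [M HM]. exists M. intros n Hn. rewrite <- E. auto. Qed.

Lemma Un_cv_squeeze (u v w : nat -> R) l n0 :
  (forall n, (n0 <= n)%nat -> u n <= v n <= w n) -> Un_cv u l -> Un_cv w l -> Un_cv v l.
Proof.
  intros H Hu Hw e He.
  destruct (Hu e He) as [M1 HM1]. destruct (Hw e He) as [M2 HM2].
  exists (Nat.max n0 (Nat.max M1 M2)). intros n Hn.
  specialize (HM1 n ltac:(lia)). specialize (HM2 n ltac:(lia)). specialize (H n ltac:(lia)).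
  unfold R_dist in *. apply Rabs_def2 in HM1, HM2. apply Rabs_def1; lra.
Qed.

Lemma ln_cv (u : nat -> R) l : 0 < l -> Un_cv u l -> Un_cv (fun n => ln (u n)) (ln l).
Proof.
  intros Hl Hu. apply continuity_seq; auto.
  apply derivable_continuous_pt. exists (/ l). now apply derivable_pt_lim_ln.
Qed.

Lemma ln_le_pos x y : 0 < x -> x <= y -> ln x <= ln y.
Proof. intros H1 [H2|H2]; [left; now apply ln_increasing|subst; lra]. Qed.

(** * A renewal inequality *)

Fixpoint win_min (G : nat -> R) (n k : nat) : R :=
  match k with O => G n | S k' => Rmin (win_min G n k') (G (n - S k')%nat) end.

Fixpoint win_max (G : nat -> R) (n k : nat) : R :=
  match k with O => G n | S k' => Rmax (win_max G n k') (G (n - S k')%nat) end.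

Lemma win_min_le G n k i : (i <= k)%nat -> win_min G n k <= G (n - i)%nat.
Proof.
  induction k; intros Hi; simpl.
  - replace i with 0%nat by lia. rewrite Nat.sub_0_r. lra.
  - destruct (Nat.eq_dec i (S k)) as [->|Hne].
    + apply Rmin_r.
    + eapply Rle_trans. apply Rmin_l. apply IHk. lia.
Qed.

Lemma win_min_glb G n k x : (forall i, (i <= k)%nat -> x <= G (n - i)%nat) -> x <= win_min G n k.
Proof.
  induction k; intros H; simpl.
  - specialize (H 0%nat ltac:(lia)). rewrite Nat.sub_0_r in H. auto.
  - apply Rmin_glb. apply IHk. intros; apply H; lia. apply H; lia.
Qed.

Lemma win_max_ge G n k i : (i <= k)%nat -> G (n - i)%nat <= win_max G n k.
Proof.
  induction k; intros Hi; simpl.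
  - replace i with 0%nat by lia. rewrite Nat.sub_0_r. lra.
  - destruct (Nat.eq_dec i (S k)) as [->|Hne].
    + apply Rmax_r.
    + eapply Rle_trans. apply IHk. lia. apply Rmax_l.
Qed.

Lemma win_max_lub G n k x : (forall i, (i <= k)%nat -> G (n - i)%nat <= x) -> win_max G n k <= x.
Proof.
  induction k; intros H; simpl.
  - specialize (H 0%nat ltac:(lia)). rewrite Nat.sub_0_r in H. auto.
  - apply Rmax_lub. apply IHk. intros; apply H; lia. apply H; lia.
Qed.

Lemma win_min_pos G n k : (forall i, (i <= k)%nat -> 0 < G (n - i)%nat) -> 0 < win_min G n k.
Proof.
  induction k; intros H; simpl.
  - specialize (H 0%nat ltac:(lia)). rewrite Nat.sub_0_r in H. auto.
  - apply Rmin_glb_lt. apply IHk. intros; apply H; lia. apply H; lia.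
Qed.

Lemma win_bounds_self G n k : win_min G n k <= G n <= win_max G n k.
Proof.
  pose proof (win_min_le G n k 0 (Nat.le_0_l k)). pose proof (win_max_ge G n k 0 (Nat.le_0_l k)).
  rewrite Nat.sub_0_r in *. lra.
Qed.

Definition renewal_bounds (G : nat -> R) (N n0 : nat) (w : R) :=
  forall n, (n0 <= n)%nat -> forall lo hi,
    (forall i, (1 <= i <= N)%nat -> lo <= G (n - i)%nat <= hi) ->
    w * (G (n - 1)%nat - lo) <= G n - lo /\ w * (hi - G (n - 1)%nat) <= hi - G n.

(* The minimum and maximum of [G] over a window of [N] consecutive indices are monotone,
   and after [N] steps the window gap has shrunk by the factor [1 - w ^ N / 2]. *)
Section Renewal.

Variables (G : nat -> R) (N n0 : nat) (w : R).
Hypotheses (HN : (1 <= N)%nat) (Hn0 : (N <= n0)%nat) (Hw : 0 < w <= 1)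
  (HG : renewal_bounds G N n0 w).

Let lo n := win_min G n (N - 1).
Let hi n := win_max G n (N - 1).

Lemma renewal_step n : (n0 - 1 <= n)%nat -> lo n <= G (S n) <= hi n.
Proof.
  intros Hn. destruct (HG (S n) ltac:(lia) (lo n) (hi n)) as [A B].
  - intros i Hi. replace (S n - i)%nat with (n - (i - 1))%nat by lia. split.
    + apply win_min_le; lia.
    + apply win_max_ge; lia.
  - replace (S n - 1)%nat with n in * by lia.
    pose proof (win_bounds_self G n (N - 1)). fold (lo n) (hi n) in H. split; nra.
Qed.

Lemma renewal_lo_mono n j : (n0 - 1 <= n)%nat -> lo n <= lo (n + j)%nat.
Proof.
  intros Hn. induction j; [rewrite Nat.add_0_r; lra|].
  eapply Rle_trans; [apply IHj|]. replace (n + S j)%nat with (S (n + j)) by lia.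
  apply win_min_glb. intros [|i] Hi.
  - rewrite Nat.sub_0_r. apply renewal_step. lia.
  - replace (S (n + j) - S i)%nat with (n + j - i)%nat by lia. apply win_min_le. lia.
Qed.

Lemma renewal_hi_anti n j : (n0 - 1 <= n)%nat -> hi (n + j)%nat <= hi n.
Proof.
  intros Hn. induction j; [rewrite Nat.add_0_r; lra|].
  eapply Rle_trans; [|apply IHj]. replace (n + S j)%nat with (S (n + j)) by lia.
  apply win_max_lub. intros [|i] Hi.
  - rewrite Nat.sub_0_r. apply renewal_step. lia.
  - replace (S (n + j) - S i)%nat with (n + j - i)%nat by lia. apply win_max_ge. lia.
Qed.

Lemma renewal_window_bounds n m : (n0 - 1 <= n)%nat -> (n - (N - 1) <= m)%nat ->
  lo n <= G m <= hi n.
Proof.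
  intros Hn Hm. destruct (Nat.le_gt_cases n m) as [H|H].
  - replace m with (n + (m - n))%nat by lia.
    pose proof (win_bounds_self G (n + (m - n)) (N - 1)).
    pose proof (renewal_lo_mono n (m - n) Hn). pose proof (renewal_hi_anti n (m - n) Hn).
    fold (lo (n + (m - n))%nat) (hi (n + (m - n))%nat) in *. lra.
  - replace m with (n - (n - m))%nat by lia. split.
    + apply win_min_le; lia.
    + apply win_max_ge; lia.
Qed.

Lemma renewal_window_ineq n j : (n0 - 1 <= n)%nat -> (1 <= j <= N)%nat ->
  w * (G (n + j - 1)%nat - lo n) <= G (n + j)%nat - lo n /\
  w * (hi n - G (n + j - 1)%nat) <= hi n - G (n + j)%nat.
Proof.
  intros Hn Hj. apply HG; [lia|]. intros i Hi. apply renewal_window_bounds; lia.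
Qed.

Lemma renewal_rise_from_lo n j : (n0 - 1 <= n)%nat -> (j <= N)%nat ->
  w ^ j * (G n - lo n) <= G (n + j)%nat - lo n.
Proof.
  intros Hn. induction j; intros Hj; [simpl; rewrite Nat.add_0_r; lra|].
  destruct (renewal_window_ineq n (S j) Hn ltac:(lia)) as [A _].
  replace (n + S j - 1)%nat with (n + j)%nat in A by lia.
  specialize (IHj ltac:(lia)). simpl. nra.
Qed.

Lemma renewal_fall_from_hi n j : (n0 - 1 <= n)%nat -> (j <= N)%nat ->
  w ^ j * (hi n - G n) <= hi n - G (n + j)%nat.
Proof.
  intros Hn. induction j; intros Hj; [simpl; rewrite Nat.add_0_r; lra|].
  destruct (renewal_window_ineq n (S j) Hn ltac:(lia)) as [_ B].
  replace (n + S j - 1)%nat with (n + j)%nat in B by lia.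
  specialize (IHj ltac:(lia)). simpl. nra.
Qed.

Lemma renewal_gap_contract n : (n0 - 1 <= n)%nat ->
  hi (n + N)%nat - lo (n + N)%nat <= (1 - w ^ N / 2) * (hi n - lo n).
Proof.
  intros Hn.
  assert (HwN : forall j, (j <= N)%nat -> 0 < w ^ N <= w ^ j).
  { intros j Hj. split; [apply pow_lt; lra|].
    replace N with (j + (N - j))%nat by lia. rewrite pow_add.
    assert (0 < w ^ j) by (apply pow_lt; lra).
    assert (w ^ (N - j) <= 1) by (rewrite <- (pow1 (N - j)); apply pow_incr; lra). nra. }
  pose proof (win_bounds_self G n (N - 1)). fold (lo n) (hi n) in H.
  pose proof (renewal_lo_mono n N Hn). pose proof (renewal_hi_anti n N Hn).
  destruct (Rle_or_lt ((hi n - lo n) / 2) (G n - lo n)) as [Hc|Hc].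
  - assert (lo n + w ^ N * ((hi n - lo n) / 2) <= lo (n + N)%nat); [|nra].
    apply win_min_glb. intros i Hi. replace (n + N - i)%nat with (n + (N - i))%nat by lia.
    pose proof (renewal_rise_from_lo n (N - i) Hn ltac:(lia)).
    pose proof (HwN (N - i)%nat ltac:(lia)). nra.
  - assert (hi (n + N)%nat <= hi n - w ^ N * ((hi n - lo n) / 2)); [|nra].
    apply win_max_lub. intros i Hi. replace (n + N - i)%nat with (n + (N - i))%nat by lia.
    pose proof (renewal_fall_from_hi n (N - i) Hn ltac:(lia)).
    pose proof (HwN (N - i)%nat ltac:(lia)). nra.
Qed.

Lemma renewal_gap_cv : Un_cv (fun n => hi n - lo n) 0.
Proof.
  set (n1 := (n0 - 1)%nat). set (rho := 1 - w ^ N / 2).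
  assert (Hrho : 0 <= rho < 1).
  { assert (0 < w ^ N <= 1); [|unfold rho; lra].
    split; [apply pow_lt; lra|]. rewrite <- (pow1 N). apply pow_incr; lra. }
  assert (Hgap : forall n, 0 <= hi n - lo n).
  { intros n. pose proof (win_bounds_self G n (N - 1)). fold (lo n) (hi n) in H. lra. }
  assert (Hgeo : forall k, hi (n1 + k * N)%nat - lo (n1 + k * N)%nat <= rho ^ k * (hi n1 - lo n1)).
  { induction k; [simpl; rewrite Nat.add_0_r; lra|].
    replace (n1 + S k * N)%nat with ((n1 + k * N) + N)%nat by lia.
    eapply Rle_trans; [apply renewal_gap_contract; lia|]. fold rho. simpl.
    pose proof (Hgap (n1 + k * N)%nat). nra. }
  intros e He. pose proof (Hgap n1) as Hg1.
  destruct (pow_lt_1_zero rho ltac:(rewrite Rabs_right; lra) (e / (hi n1 - lo n1 + 1)))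
    as [k0 Hk0]; [apply Rdiv_lt_0_compat; lra|].
  specialize (Hk0 k0 (Nat.le_refl _)). rewrite Rabs_right in Hk0 by (apply Rle_ge, pow_le; lra).
  exists (n1 + k0 * N)%nat. intros n Hn. unfold R_dist. rewrite Rminus_0_r, Rabs_right by (apply Rle_ge, Hgap).
  replace n with ((n1 + k0 * N) + (n - (n1 + k0 * N)))%nat by lia.
  pose proof (renewal_lo_mono (n1 + k0 * N) (n - (n1 + k0 * N)) ltac:(lia)).
  pose proof (renewal_hi_anti (n1 + k0 * N) (n - (n1 + k0 * N)) ltac:(lia)).
  pose proof (Hgeo k0).
  assert (rho ^ k0 * (hi n1 - lo n1) < e).
  { apply Rmult_lt_compat_r with (r := hi n1 - lo n1 + 1) in Hk0; [|lra].
    unfold Rdiv in Hk0. rewrite Rmult_assoc, Rinv_l, Rmult_1_r in Hk0 by lra.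
    assert (0 <= rho ^ k0) by (apply pow_le; lra). nra. }
  lra.
Qed.

Theorem renewal_cv : exists c, Un_cv G c /\ win_min G (n0 - 1) (N - 1) <= c.
Proof.
  set (n1 := (n0 - 1)%nat).
  set (u := fun k => lo (k + n1)%nat).
  assert (Hug : Un_growing u).
  { intros k. unfold u. replace (S k + n1)%nat with (k + n1 + 1)%nat by lia.
    apply renewal_lo_mono; lia. }
  assert (Hub : has_ub u).
  { exists (hi n1). intros x [k ->]. unfold u. rewrite Nat.add_comm.
    pose proof (renewal_window_bounds n1 (n1 + k) (Nat.le_refl _) ltac:(lia)).
    pose proof (win_bounds_self G (n1 + k) (N - 1)). fold (lo (n1 + k)%nat) in H0. lra. }
  destruct (growing_cv u Hug Hub) as [c Hc].
  assert (Hlo : Un_cv lo c) by (apply (CV_shift lo n1); exact Hc).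
  exists c. split.
  - apply (Un_cv_squeeze lo G hi c 0).
    + intros n _. apply win_bounds_self.
    + exact Hlo.
    + replace c with (c + 0) by ring. apply Un_cv_ext with (u := fun n => lo n + (hi n - lo n)).
      * intros n. ring.
      * apply CV_plus; [exact Hlo|apply renewal_gap_cv].
  - apply (Rle_cv_lim (Un := fun _ => u 0%nat) (Vn := u)); [|apply Un_cv_const|exact Hc].
    intros k. induction k; [lra|]. eapply Rle_trans; [apply IHk|apply Hug].
Qed.

End Renewal.

(** * Equidistribution of irrational rotations *)

Lemma Int_part_bounds x : IZR (Int_part x) <= x < IZR (Int_part x) + 1.
Proof. destruct (base_Int_part x). lra. Qed.

Lemma Int_part_nonneg x : 0 <= x -> (0 <= Int_part x)%Z.
Proof.
  intros H. destruct (Int_part_bounds x). assert (-1 < IZR (Int_part x)) by lra.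
  assert (-1 < Int_part x)%Z by (apply lt_IZR; auto). lia.
Qed.

Lemma IZR_eq_INR_of_close (z : Z) (M : nat) : IZR z < INR M + 1 -> INR M < IZR z + 1 -> IZR z = INR M.
Proof.
  intros H1 H2. rewrite INR_IZR_INZ in *. f_equal.
  assert (z < Z.of_nat M + 1)%Z by (apply lt_IZR; rewrite plus_IZR; auto).
  assert (Z.of_nat M < z + 1)%Z by (apply lt_IZR; rewrite plus_IZR; auto). lia.
Qed.

Lemma frac_range x : 0 <= frac_part x < 1.
Proof. destruct (base_fp x). lra. Qed.

Lemma frac_unique x z : IZR z <= x < IZR z + 1 -> frac_part x = x - IZR z.
Proof. intros H. unfold frac_part. rewrite <- (Int_part_spec x z) by lra. reflexivity. Qed.

Lemma frac_shift x z : frac_part (x + IZR z) = frac_part x.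
Proof.
  rewrite (frac_unique (x + IZR z) (Int_part x + z)).
  - unfold frac_part. rewrite plus_IZR. ring.
  - rewrite plus_IZR. destruct (Int_part_bounds x). lra.
Qed.

Lemma frac_lt_iff_near_int y l : frac_part y < l <-> exists z, IZR z <= y < IZR z + l.
Proof.
  split.
  - intros H. exists (Int_part y). unfold frac_part in H. destruct (Int_part_bounds y). lra.
  - intros [z Hz]. destruct (Rlt_or_le y (IZR z + 1)) as [H|H].
    + rewrite (frac_unique y z) by lra. lra.
    + pose proof (frac_range y). lra.
Qed.

Lemma frac_lt_Rmax0 y l : frac_part y < l <-> frac_part y < Rmax 0 l.
Proof. pose proof (frac_range y). unfold Rmax. destruct (Rle_dec 0 l); split; intros; lra. Qed.

Lemma frac_lt_Rmin1 y l : 0 <= l -> (frac_part y < l <-> frac_part y < Rmin 1 l).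
Proof. intros Hl. pose proof (frac_range y). unfold Rmin. destruct (Rle_dec 1 l); split; intros; lra. Qed.

Definition indR (P : Prop) : R := INR (indicator P).

Lemma indR_true (P : Prop) : P -> indR P = 1.
Proof. intros H. unfold indR, indicator. destruct (excluded_middle_informative P); [reflexivity|tauto]. Qed.

Lemma indR_false (P : Prop) : ~ P -> indR P = 0.
Proof. intros H. unfold indR, indicator. destruct (excluded_middle_informative P); [tauto|reflexivity]. Qed.

Lemma indR_range P : 0 <= indR P <= 1.
Proof. unfold indR, indicator. destruct (excluded_middle_informative P); simpl; lra. Qed.

Lemma indR_ext (P Q : Prop) : (P <-> Q) -> indR P = indR Q.
Proof.
  intros H. destruct (classic P) as [p|np].
  - rewrite !indR_true; tauto.
  - rewrite !indR_false; tauto.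
Qed.

Lemma indR_le (P Q : Prop) : (P -> Q) -> indR P <= indR Q.
Proof.
  intros H. destruct (classic P) as [p|np].
  - rewrite !indR_true; auto. lra.
  - rewrite (indR_false P np). apply indR_range.
Qed.

Definition sum_below (g : nat -> R) (m : nat) : R := sumR (map g (seq 0 m)).

Lemma sum_below_S g m : sum_below g (S m) = sum_below g m + g m.
Proof. unfold sum_below. rewrite seq_S, map_app, sumR_app. simpl. ring. Qed.

Lemma sum_below_0 g : sum_below g 0 = 0.
Proof. reflexivity. Qed.

Lemma sum_below_ext g h m : (forall j, (j < m)%nat -> g j = h j) -> sum_below g m = sum_below h m.
Proof.
  intros H. induction m. reflexivity. rewrite !sum_below_S. rewrite IHm by (intros; apply H; lia).
  rewrite H by lia. reflexivity.
Qed.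

Lemma sum_below_plus g h m : sum_below (fun j => g j + h j) m = sum_below g m + sum_below h m.
Proof. induction m. unfold sum_below; simpl; lra. rewrite !sum_below_S, IHm. ring. Qed.

Lemma sum_below_const c m : sum_below (fun _ => c) m = INR m * c.
Proof. induction m. unfold sum_below; simpl; lra. rewrite sum_below_S, IHm, S_INR. ring. Qed.

Lemma sum_below_add g a b : sum_below g (a + b) = sum_below g a + sum_below (fun j => g (a + j)%nat) b.
Proof.
  induction b. rewrite Nat.add_0_r, sum_below_0. ring.
  replace (a + S b)%nat with (S (a + b)) by lia. rewrite !sum_below_S, IHb. ring.
Qed.

Lemma sum_below_rev g m : sum_below (fun j => g (m - 1 - j)%nat) m = sum_below g m.
Proof.
  revert g. induction m; intros g. reflexivity.
  rewrite sum_below_S. replace (S m - 1 - m)%nat with 0%nat by lia.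
  rewrite (sum_below_ext _ (fun j => g (S (m - 1 - j))) m) by (intros; f_equal; lia).
  rewrite (IHm (fun i => g (S i))).
  replace (S m) with (1 + m)%nat by lia. rewrite sum_below_add. unfold sum_below at 2. simpl. ring.
Qed.

Lemma sum_below_minus g h m : sum_below (fun j => g j - h j) m = sum_below g m - sum_below h m.
Proof. induction m; [unfold sum_below; simpl; lra|]. rewrite !sum_below_S, IHm. ring. Qed.

Lemma sum_below_error_le g c e m : (forall j, (j < m)%nat -> Rabs (g j - c) <= e) ->
  Rabs (sum_below g m - INR m * c) <= INR m * e.
Proof.
  intros H. induction m; [unfold sum_below; simpl; rewrite Rmult_0_l, Rminus_diag, Rabs_R0; lra|].
  rewrite sum_below_S, S_INR. specialize (IHm ltac:(intros; apply H; lia)).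
  specialize (H m ltac:(lia)). apply Rabs_le_bounds in IHm, H. apply Rabs_le. lra.
Qed.

Lemma count_ap_lt_bounds (d T : R) m : 0 < d ->
  let c := sum_below (fun j => indR (INR j * d < T)) m in
  (0 < T -> c < T / d + 1) /\ Rmin (INR m) (T / d) <= c /\ c <= INR m.
Proof.
  intros Hd. cbv zeta. induction m.
  - rewrite sum_below_0. simpl INR. split; [intros; assert (0 < T / d) by (apply Rdiv_lt_0_compat; lra); lra|].
    split; [|lra]. apply Rmin_l.
  - rewrite sum_below_S, S_INR. destruct IHm as [U [Lo Up]].
    destruct (Rlt_dec (INR m * d) T) as [Hlt|Hge].
    + rewrite indR_true by auto. rewrite ?S_INR. repeat split.
      * intros HT. assert (INR m < T / d).
        { apply (Rmult_lt_reg_r d); auto. unfold Rdiv. rewrite Rmult_assoc, Rinv_l; lra. }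
        lra.
      * unfold Rmin in *. destruct (Rle_dec (INR m) (T / d)); destruct (Rle_dec (INR m + 1) (T / d)); lra.
      * lra.
    + rewrite indR_false by auto. rewrite ?S_INR. repeat split.
      * intros HT. specialize (U HT). lra.
      * assert (T / d <= INR m).
        { apply (Rmult_le_reg_r d); auto. unfold Rdiv. rewrite Rmult_assoc, Rinv_l; lra. }
        unfold Rmin in *. destruct (Rle_dec (INR m) (T / d)); destruct (Rle_dec (INR m + 1) (T / d)); lra.
      * lra.
Qed.

Lemma count_ap_lt_approx (d T : R) m : 0 < d -> INR m * d <= 1 < (INR m + 1) * d -> 0 < T <= 1 ->
  Rabs (sum_below (fun j => indR (INR j * d < T)) m - T / d) <= 1.
Proof.
  intros Hd Hm HT. destruct (count_ap_lt_bounds d T m Hd) as [U [Lo _]]. specialize (U (proj1 HT)).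
  assert (HTd : T / d <= / d) by (unfold Rdiv; rewrite <- (Rmult_1_l (/ d)) at 2;
    apply Rmult_le_compat_r; [left; apply Rinv_0_lt_compat|]; lra).
  assert (Hm' : / d < INR m + 1).
  { apply (Rmult_lt_reg_r d); auto. rewrite Rinv_l; lra. }
  apply Rabs_le. unfold Rmin in Lo. destruct (Rle_dec (INR m) (T / d)); lra.
Qed.

(* Cutting the circle at [1 - frac_part y] turns the arc condition on [y + u] into two
   threshold conditions on [u]. *)
Lemma indR_frac_lt_shift y l u : 0 <= l <= 1 -> 0 <= u < 1 ->
  indR (frac_part (y + u) < l) =
  l + frac_part (y - l) - frac_part y + indR (u < 1 - frac_part (y - l)) - indR (u < 1 - frac_part y).
Proof.
  intros Hl Hu. set (z := Int_part y). assert (Hz := Int_part_bounds y). fold z in Hz.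
  assert (Ef : frac_part y = y - IZR z) by reflexivity.
  destruct (Rlt_or_le (y - IZR z) l) as [Hfl|Hfl].
  - assert (Ef' : frac_part (y - l) = y - l - IZR (z - 1)).
    { apply frac_unique. rewrite minus_IZR. simpl. lra. }
    rewrite minus_IZR in Ef'. simpl in Ef'.
    destruct (Rlt_or_le (y - IZR z + u) 1) as [Hb|Hb].
    + assert (E : frac_part (y + u) = y + u - IZR z) by (apply frac_unique; lra).
      rewrite E, Ef, Ef'. rewrite (indR_true (u < 1 - (y - IZR z))) by lra.
      rewrite (indR_ext (u < 1 - (y - l - (IZR z - 1))) (y + u - IZR z < l)) by (split; intros; lra).
      ring.
    + assert (E : frac_part (y + u) = y + u - IZR (z + 1)) by (apply frac_unique; rewrite plus_IZR; simpl; lra).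
      rewrite plus_IZR in E. simpl in E.
      rewrite E, Ef, Ef'. rewrite (indR_false (u < 1 - (y - IZR z))) by lra.
      rewrite (indR_true (y + u - (IZR z + 1) < l)) by lra.
      rewrite (indR_false (u < 1 - (y - l - (IZR z - 1)))) by lra.
      ring.
  - assert (Ef' : frac_part (y - l) = y - l - IZR z) by (apply frac_unique; lra).
    destruct (Rlt_or_le (y - IZR z + u) 1) as [Hb|Hb].
    + assert (E : frac_part (y + u) = y + u - IZR z) by (apply frac_unique; lra).
      rewrite E, Ef, Ef'. rewrite (indR_true (u < 1 - (y - IZR z))) by lra.
      rewrite (indR_true (u < 1 - (y - l - IZR z))) by lra.
      rewrite (indR_false (y + u - IZR z < l)) by lra. ring.
    + assert (E : frac_part (y + u) = y + u - IZR (z + 1)) by (apply frac_unique; rewrite plus_IZR; simpl; lra).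
      rewrite plus_IZR in E. simpl in E.
      rewrite E, Ef, Ef'. rewrite (indR_false (u < 1 - (y - IZR z))) by lra.
      rewrite (indR_ext (y + u - (IZR z + 1) < l) (u < 1 - (y - l - IZR z))) by (split; intros; lra).
      ring.
Qed.

Lemma ap_count_error_pos (d y l : R) m : 0 < d -> INR m * d <= 1 < (INR m + 1) * d -> 0 <= l <= 1 ->
  Rabs (sum_below (fun j => indR (frac_part (y + INR j * d) < l)) m - INR m * l) <= 3.
Proof.
  intros Hd Hm Hl.
  set (f := frac_part y). set (f' := frac_part (y - l)).
  assert (Hf := frac_range y). assert (Hf' := frac_range (y - l)). fold f f' in Hf, Hf'.
  rewrite (sum_below_ext _ (fun j => (l + f' - f) + (indR (INR j * d < 1 - f') - indR (INR j * d < 1 - f))) m).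
  2:{ intros j Hj. rewrite indR_frac_lt_shift; auto. fold f f'. ring.
      split. apply Rmult_le_pos; [apply pos_INR|lra].
      assert (INR j + 1 <= INR m) by (rewrite <- S_INR; apply le_INR; lia). nra. }
  rewrite sum_below_plus, sum_below_const, sum_below_minus.
  pose proof (count_ap_lt_approx d (1 - f') m Hd Hm ltac:(lra)) as C1.
  pose proof (count_ap_lt_approx d (1 - f) m Hd Hm ltac:(lra)) as C2.
  apply Rabs_le_bounds in C1, C2.
  assert (HD : INR m <= / d < INR m + 1).
  { split.
    - apply (Rmult_le_reg_r d); auto. rewrite Rinv_l; lra.
    - apply (Rmult_lt_reg_r d); auto. rewrite Rinv_l; lra. }
  unfold Rdiv in C1, C2. apply Rabs_le.
  assert (Rabs ((f' - f) * (INR m - / d)) <= 1).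
  { rewrite Rabs_mult. pose proof (Rabs_pos (f' - f)). pose proof (Rabs_pos (INR m - / d)).
    assert (Rabs (f' - f) <= 1) by (apply Rabs_le; lra).
    assert (Rabs (INR m - / d) <= 1) by (apply Rabs_le; lra). nra. }
  apply Rabs_le_bounds in H. lra.
Qed.

Lemma ap_count_error (d y l : R) m : 0 < Rabs d -> INR m * Rabs d <= 1 < (INR m + 1) * Rabs d -> 0 <= l <= 1 ->
  Rabs (sum_below (fun j => indR (frac_part (y + INR j * d) < l)) m - INR m * l) <= 3.
Proof.
  intros Hd Hm Hl. destruct (Rle_or_lt 0 d) as [Hp|Hn].
  - rewrite Rabs_right in * by lra. apply ap_count_error_pos; auto.
  - rewrite Rabs_left in * by lra.
    rewrite <- sum_below_rev.
    rewrite (sum_below_ext _ (fun j => indR (frac_part ((y + (INR m - 1) * d) + INR j * (- d)) < l)) m).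
    + apply ap_count_error_pos; auto; lra.
    + intros j Hj. f_equal. f_equal. f_equal. rewrite minus_INR by lia. rewrite minus_INR by lia.
      simpl. ring.
Qed.

Lemma pigeonhole Q (f : nat -> nat) : (forall i, (i <= Q)%nat -> (f i < Q)%nat) ->
  exists i j, (i < j <= Q)%nat /\ f i = f j.
Proof.
  revert f. induction Q as [|Q IH]; intros f Hf.
  - specialize (Hf 0%nat ltac:(lia)). lia.
  - destruct (classic (exists i, (i < S Q)%nat /\ f i = f (S Q))) as [[i [Hi E]]|Hno].
    + exists i, (S Q). split; auto.
    + set (g := fun i => if (f i <? f (S Q))%nat then f i else (f i - 1)%nat).
      destruct (IH g) as [i [j [Hij E]]].
      * intros i Hi. unfold g. assert (f (S Q) < S Q)%nat by (apply Hf; lia).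
        assert (f i < S Q)%nat by (apply Hf; lia).
        assert (f i <> f (S Q)) by (intros E; apply Hno; exists i; split; auto; lia).
        destruct (Nat.ltb_spec (f i) (f (S Q))); lia.
      * exists i, j. split; [lia|]. unfold g in E.
        assert (f i <> f (S Q)) by (intros E'; apply Hno; exists i; split; auto; lia).
        assert (f j <> f (S Q)) by (intros E'; apply Hno; exists j; split; auto; lia).
        destruct (Nat.ltb_spec (f i) (f (S Q))); destruct (Nat.ltb_spec (f j) (f (S Q))); lia.
Qed.

Definition irrational (a : R) := forall (p : Z) (q : nat), (1 <= q)%nat -> INR q * a <> IZR p.

Lemma dirichlet a Q : irrational a -> (1 <= Q)%nat ->
  exists q p, (1 <= q)%nat /\ 0 < Rabs (INR q * a - IZR p) < / INR Q.
Proof.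
  intros Hirr HQ.
  set (fr := fun i : nat => frac_part (INR i * a)).
  set (box := fun i => Z.to_nat (Int_part (INR Q * fr i))).
  assert (HQp : 0 < INR Q) by (apply (lt_INR 0); lia).
  assert (Hbox : forall i, IZR (Z.of_nat (box i)) <= INR Q * fr i < IZR (Z.of_nat (box i)) + 1).
  { intros i. unfold box. assert (F := frac_range (INR i * a)). fold (fr i) in F.
    rewrite Z2Nat.id by (apply Int_part_nonneg; nra). apply Int_part_bounds. }
  destruct (pigeonhole Q box) as [i [j [Hij E]]].
  { intros i _. specialize (Hbox i). assert (F := frac_range (INR i * a)). fold (fr i) in F.
    assert (IZR (Z.of_nat (box i)) < INR Q) by nra. rewrite <- INR_IZR_INZ in H.
    apply INR_lt. auto. }
  exists (j - i)%nat, (Int_part (INR j * a) - Int_part (INR i * a))%Z. split; [lia|].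
  assert (Ed : INR (j - i) * a - IZR (Int_part (INR j * a) - Int_part (INR i * a)) = fr j - fr i).
  { unfold fr, frac_part. rewrite minus_INR by lia. rewrite minus_IZR. ring. }
  rewrite Ed. split.
  - apply Rabs_pos_lt. intros Z. apply (Hirr (Int_part (INR j * a) - Int_part (INR i * a))%Z (j - i)%nat ltac:(lia)).
    rewrite <- Ed in Z. lra.
  - assert (Hi := Hbox i). assert (Hj := Hbox j). rewrite E in Hi.
    assert (Rabs (INR Q * (fr j - fr i)) < 1) by (apply Rabs_def1; lra).
    rewrite Rabs_mult, Rabs_right in H by lra.
    apply (Rmult_lt_reg_l (INR Q)); auto. rewrite Rinv_r; lra.
Qed.

Lemma dirichlet_step a Q : irrational a -> (1 <= Q)%nat ->
  exists q p m, (1 <= q)%nat /\ (Q <= m)%nat /\ 0 < Rabs (INR q * a - IZR p) /\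
    INR m * Rabs (INR q * a - IZR p) <= 1 < (INR m + 1) * Rabs (INR q * a - IZR p).
Proof.
  intros Hirr HQ. destruct (dirichlet a Q Hirr HQ) as [q [p [Hq [Hd1 Hd2]]]].
  set (d := Rabs (INR q * a - IZR p)) in *.
  exists q, p, (Z.to_nat (Int_part (/ d))).
  assert (Hinvd : 0 < / d) by (apply Rinv_0_lt_compat; auto).
  assert (Hm : INR (Z.to_nat (Int_part (/ d))) <= / d < INR (Z.to_nat (Int_part (/ d))) + 1).
  { rewrite INR_IZR_INZ, Z2Nat.id by (apply Int_part_nonneg; lra). apply Int_part_bounds. }
  set (m := Z.to_nat (Int_part (/ d))) in *.
  assert (HQd : INR Q < / d).
  { rewrite <- (Rinv_inv (INR Q)). apply Rinv_lt_contravar; auto.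
    apply Rmult_lt_0_compat; auto. apply Rinv_0_lt_compat, (lt_INR 0); lia. }
  repeat split; auto.
  - assert (INR Q < INR (S m)) by (rewrite S_INR; lra). apply INR_lt in H. lia.
  - apply (Rmult_le_reg_r (/ d)); auto. rewrite Rmult_assoc, Rinv_r, Rmult_1_l, Rmult_1_r; lra.
  - apply (Rmult_lt_reg_r (/ d)); auto. rewrite Rmult_assoc, Rinv_r, Rmult_1_l, Rmult_1_r; lra.
Qed.

Definition rot_count (a b l : R) (n : nat) := sum_below (fun k => indR (frac_part (INR k * a + b) < l)) n.

Lemma rot_count_add a b l x y :
  rot_count a b l (x + y) = rot_count a b l x + rot_count a (b + INR x * a) l y.
Proof.
  unfold rot_count. rewrite sum_below_add. f_equal. apply sum_below_ext. intros j _.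
  rewrite plus_INR. f_equal. f_equal. f_equal. ring.
Qed.

Lemma rot_count_blocks a b l P B :
  rot_count a b l (B * P) = sum_below (fun j => rot_count a (b + INR (j * P) * a) l P) B.
Proof.
  induction B; [reflexivity|]. replace (S B * P)%nat with (B * P + P)%nat by lia.
  rewrite rot_count_add, IHB, sum_below_S. reflexivity.
Qed.

Lemma sum_below_swap (F : nat -> nat -> R) m q :
  sum_below (fun j => sum_below (fun r => F j r) q) m = sum_below (fun r => sum_below (fun j => F j r) m) q.
Proof.
  induction m.
  - rewrite sum_below_0, (sum_below_ext _ (fun _ => 0)) by (intros; apply sum_below_0). rewrite sum_below_const. ring.
  - rewrite sum_below_S, IHm, <- sum_below_plus. apply sum_below_ext. intros. rewrite sum_below_S. reflexivity.
Qed.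

Lemma rot_count_error_le a b l n : 0 <= l <= 1 -> Rabs (rot_count a b l n - INR n * l) <= INR n.
Proof.
  intros Hl. rewrite <- (Rmult_1_r (INR n)) at 2. apply sum_below_error_le. intros j _.
  pose proof (indR_range (frac_part (INR j * a + b) < l)). apply Rabs_le. lra.
Qed.

(* Reading a block of [m * q] consecutive terms column by column gives [q] progressions
   of step [d = q a - p], each winding about once around the circle. *)
Lemma rot_count_block_error a l q p m : 0 <= l <= 1 ->
  let d := INR q * a - IZR p in
  0 < Rabs d -> INR m * Rabs d <= 1 < (INR m + 1) * Rabs d ->
  forall b, Rabs (rot_count a b l (m * q) - INR (m * q) * l) <= 3 * INR q.
Proof.
  intros Hl d Hd Hm b.
  rewrite rot_count_blocks. unfold rot_count. rewrite sum_below_swap.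
  rewrite (sum_below_ext _ (fun r => sum_below (fun j => indR (frac_part ((INR r * a + b) + INR j * d) < l)) m) q).
  2:{ intros r Hr. apply sum_below_ext. intros j Hj. f_equal. f_equal.
      replace (INR r * a + (b + INR (j * q) * a))
        with ((INR r * a + b + INR j * d) + IZR (Z.of_nat j * p)).
      - apply frac_shift.
      - unfold d. rewrite mult_INR, mult_IZR, <- INR_IZR_INZ. ring. }
  replace (INR (m * q) * l) with (INR q * (INR m * l)) by (rewrite mult_INR; ring).
  rewrite (Rmult_comm 3). apply sum_below_error_le.
  intros r _. apply ap_count_error; auto.
Qed.

Lemma rot_count_error_bound a b l q p m : (1 <= q)%nat -> (1 <= m)%nat -> 0 <= l <= 1 ->
  let d := INR q * a - IZR p in
  0 < Rabs d -> INR m * Rabs d <= 1 < (INR m + 1) * Rabs d ->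
  forall n, Rabs (rot_count a b l n - INR n * l) <= 3 * INR n / INR m + INR (m * q).
Proof.
  intros Hq Hm1 Hl d Hd Hm n. set (P := (m * q)%nat).
  assert (HP : (1 <= P)%nat) by (unfold P; nia).
  set (B := (n / P)%nat). set (rm := (n mod P)%nat).
  assert (En : n = (B * P + rm)%nat) by (unfold B, rm; rewrite (Nat.div_mod_eq n P) at 1; lia).
  assert (Hrm : (rm < P)%nat) by (unfold rm; apply Nat.mod_upper_bound; lia).
  assert (Hblocks : Rabs (rot_count a b l (B * P) - INR (B * P) * l) <= INR B * (3 * INR q)).
  { rewrite rot_count_blocks, mult_INR, Rmult_assoc. apply sum_below_error_le.
    intros j _. apply (rot_count_block_error a l q p m); auto. }
  pose proof (rot_count_error_le a (b + INR (B * P) * a) l rm Hl) as Htail.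
  assert (HBn : INR B * (3 * INR q) <= 3 * INR n / INR m).
  { assert (Hm0 : 0 < INR m) by (apply (lt_INR 0); lia).
    assert (INR B * INR P <= INR n).
    { rewrite En, plus_INR, mult_INR. pose proof (pos_INR rm). lra. }
    unfold P in H. rewrite mult_INR in H.
    apply (Rmult_le_reg_r (INR m)); auto. replace (3 * INR n / INR m * INR m) with (3 * INR n) by (field; lra).
    nra. }
  assert (INR rm <= INR P) by (apply le_INR; lia).
  assert (Ec : rot_count a b l n = rot_count a b l (B * P) + rot_count a (b + INR (B * P) * a) l rm)
    by (rewrite En at 1; apply rot_count_add).
  replace (INR n * l) with (INR (B * P) * l + INR rm * l) by (rewrite En at 1; rewrite plus_INR; ring).
  rewrite Ec. apply Rabs_le_bounds in Hblocks, Htail. apply Rabs_le. fold P. lra.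
Qed.

Theorem rot_count_cv a b l : irrational a -> 0 <= l <= 1 ->
  Un_cv (fun n => rot_count a b l n / INR n) l.
Proof.
  intros Hirr Hl eps He.
  destruct (INR_unbounded (6 / eps)) as [Q HQ].
  assert (HQ1 : (1 <= Q)%nat).
  { destruct Q; [|lia]. simpl in HQ. assert (0 < 6 / eps) by (apply Rdiv_lt_0_compat; lra). lra. }
  destruct (dirichlet_step a Q Hirr HQ1) as [q [p [m [Hq [HQm [Hd Hm]]]]]].
  assert (Hm0 : 0 < INR m) by (apply (lt_INR 0); lia).
  assert (Hmeps : 6 < eps * INR m).
  { assert (INR Q <= INR m) by (apply le_INR; lia).
    assert (6 / eps * eps = 6) by (field; lra). nra. }
  destruct (INR_unbounded (2 * INR (m * q) / eps)) as [n0 Hn0].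
  exists (Nat.max 1 n0). intros n Hn. unfold R_dist.
  assert (Hnp : 0 < INR n) by (apply (lt_INR 0); lia).
  assert (HnP : 2 * INR (m * q) < eps * INR n).
  { assert (INR n0 <= INR n) by (apply le_INR; lia).
    assert (2 * INR (m * q) / eps * eps = 2 * INR (m * q)) by (field; lra). nra. }
  assert (Hmn : 3 * INR n / INR m < eps / 2 * INR n).
  { apply (Rmult_lt_reg_r (INR m)); auto.
    replace (3 * INR n / INR m * INR m) with (3 * INR n) by (field; lra). nra. }
  pose proof (rot_count_error_bound a b l q p m Hq ltac:(lia) Hl Hd Hm n) as Herr.
  replace (rot_count a b l n / INR n - l) with ((rot_count a b l n - INR n * l) / INR n) by (field; lra).
  unfold Rdiv. rewrite Rabs_mult, Rabs_inv, (Rabs_right (INR n)) by lra.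
  apply (Rmult_lt_reg_r (INR n)); auto. rewrite Rmult_assoc, Rinv_l, Rmult_1_r by lra.
  lra.
Qed.

Lemma sum_below_ge_eventually (A lo : nat -> R) n1 :
  (forall k, (n1 <= k)%nat -> lo k <= A k) -> (forall k, 0 <= A k) -> (forall k, lo k <= 1) ->
  forall n, sum_below lo n - INR n1 <= sum_below A n.
Proof.
  intros H1 H2 H3.
  assert (G : forall n, sum_below lo n - INR (Nat.min n n1) <= sum_below A n).
  { induction n. rewrite !sum_below_0. simpl. lra.
    rewrite !sum_below_S. destruct (Nat.le_gt_cases n1 n) as [Hle|Hgt].
    - replace (Nat.min (S n) n1) with (Nat.min n n1) by lia. specialize (H1 n Hle). lra.
    - replace (Nat.min (S n) n1) with (S (Nat.min n n1)) by lia. rewrite S_INR.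
      specialize (H2 n). specialize (H3 n). lra. }
  intros n. specialize (G n). assert (INR (Nat.min n n1) <= INR n1) by (apply le_INR; lia). lra.
Qed.

Lemma sum_below_le_eventually (A hi : nat -> R) n1 :
  (forall k, (n1 <= k)%nat -> A k <= hi k) -> (forall k, A k <= 1) -> (forall k, 0 <= hi k) ->
  forall n, sum_below A n <= sum_below hi n + INR n1.
Proof.
  intros H1 H2 H3.
  assert (G : forall n, sum_below A n <= sum_below hi n + INR (Nat.min n n1)).
  { induction n. rewrite !sum_below_0. simpl. lra.
    rewrite !sum_below_S. destruct (Nat.le_gt_cases n1 n) as [Hle|Hgt].
    - replace (Nat.min (S n) n1) with (Nat.min n n1) by lia. specialize (H1 n Hle). lra.
    - replace (Nat.min (S n) n1) with (S (Nat.min n n1)) by lia. rewrite S_INR.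
      specialize (H2 n). specialize (H3 n). lra. }
  intros n. specialize (G n). assert (INR (Nat.min n n1) <= INR n1) by (apply le_INR; lia). lra.
Qed.

Lemma density_squeeze (A : nat -> R) (target : R) :
  (forall k, 0 <= A k <= 1) ->
  (forall eps, 0 < eps -> exists (lo hi : nat -> R) (n1 : nat) (Llo Lhi : R),
     (forall k, (n1 <= k)%nat -> lo k <= A k <= hi k) /\
     (forall k, lo k <= 1 /\ 0 <= hi k) /\
     Un_cv (fun n => sum_below lo n / INR n) Llo /\ Un_cv (fun n => sum_below hi n / INR n) Lhi /\
     target - eps <= Llo /\ Lhi <= target + eps) ->
  Un_cv (fun n => sum_below A n / INR n) target.
Proof.
  intros HA H e He.
  destruct (H (e / 4) ltac:(lra)) as [lo [hi [n1 [Llo [Lhi [Hb [Hr [Clo [Chi [Hlo Hhi]]]]]]]]]].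
  destruct (Clo (e / 4) ltac:(lra)) as [M1 HM1].
  destruct (Chi (e / 4) ltac:(lra)) as [M2 HM2].
  destruct (INR_unbounded (4 * INR n1 / e)) as [M3 HM3].
  exists (Nat.max 1 (Nat.max M1 (Nat.max M2 M3))). intros n Hn.
  specialize (HM1 n ltac:(lia)). specialize (HM2 n ltac:(lia)).
  unfold R_dist in *.
  assert (Hnp : 0 < INR n) by (apply (lt_INR 0); lia).
  assert (L1 := sum_below_ge_eventually A lo n1 (fun k Hk => proj1 (Hb k Hk)) (fun k => proj1 (HA k)) (fun k => proj1 (Hr k)) n).
  assert (L2 := sum_below_le_eventually A hi n1 (fun k Hk => proj2 (Hb k Hk)) (fun k => proj2 (HA k)) (fun k => proj2 (Hr k)) n).
  assert (Hn1 : INR n1 / INR n < e / 4).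
  { assert (4 * INR n1 / e < INR n) by (assert (INR M3 <= INR n) by (apply le_INR; lia); lra).
    apply (Rmult_lt_reg_r (INR n)); auto. replace (INR n1 / INR n * INR n) with (INR n1) by (field; lra).
    apply (Rmult_lt_reg_r (4 / e)). apply Rdiv_lt_0_compat; lra.
    replace (e / 4 * INR n * (4 / e)) with (INR n) by (field; lra).
    replace (INR n1 * (4 / e)) with (4 * INR n1 / e) by (field; lra). lra. }
  assert (D1 : sum_below lo n / INR n - INR n1 / INR n <= sum_below A n / INR n).
  { replace (sum_below lo n / INR n - INR n1 / INR n) with ((sum_below lo n - INR n1) / INR n) by (field; lra).
    unfold Rdiv. apply Rmult_le_compat_r; auto. left; apply Rinv_0_lt_compat; auto. }
  assert (D2 : sum_below A n / INR n <= sum_below hi n / INR n + INR n1 / INR n).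
  { replace (sum_below hi n / INR n + INR n1 / INR n) with ((sum_below hi n + INR n1) / INR n) by (field; lra).
    unfold Rdiv. apply Rmult_le_compat_r; auto. left; apply Rinv_0_lt_compat; auto. }
  apply Rabs_def2 in HM1. apply Rabs_def2 in HM2.
  apply Rabs_def1; lra.
Qed.

(** * The numeration system H *)

Open Scope nat_scope.

Lemma Hlist_length L m : length (Hlist L m) = m.
Proof. induction m; simpl; auto. rewrite length_app, IHm; simpl; lia. Qed.

Lemma nth_Hlist L m i : i < m -> nth i (Hlist L m) 0 = Hn L (S i).
Proof.
  intros Hi. induction m as [|m IH]; [lia|]. simpl.
  destruct (Nat.eq_dec i m) as [->|Hne].
  - unfold Hn. simpl. now rewrite Nat.sub_0_r.
  - rewrite app_nth1 by (rewrite Hlist_length; lia). apply IH. lia.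
Qed.

Lemma Hn_S L n : Hn L (S n) = next_H L (Hlist L n).
Proof.
  unfold Hn. simpl. replace (n - 0) with n by lia.
  rewrite app_nth2 by (rewrite Hlist_length; lia).
  rewrite Hlist_length, Nat.sub_diag. reflexivity.
Qed.

(* [Hval L w r] is the value of the digit string [w] followed by [r] zeros. *)
Fixpoint Hval (L : list nat) (w : list nat) (r : nat) : nat :=
  match w with
  | [] => 0
  | d :: w' => d * Hn L (length w' + r + 1) + Hval L w' r
  end.

Lemma Hval_app L u v r : Hval L (u ++ v) r = Hval L u (length v + r) + Hval L v r.
Proof.
  induction u; simpl; auto. rewrite IHu, length_app.
  replace (length u + length v + r + 1) with (length u + (length v + r) + 1) by lia. lia.
Qed.

Lemma Hval_repeat0 L n r : Hval L (repeat 0 n) r = 0.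
Proof. induction n; simpl; auto. Qed.

Lemma Hval_pad L u n : Hval L (u ++ repeat 0 n) 0 = Hval L u n.
Proof. rewrite Hval_app, Hval_repeat0, repeat_length, !Nat.add_0_r; reflexivity. Qed.

Lemma Hval_map_seq L f s n r :
  Hval L (map f (seq s n)) r =
  list_sum (map (fun k => f k * Hn L (n + s + r - k)) (seq s n)).
Proof.
  revert s. induction n; intros s; [reflexivity|].
  change (seq s (S n)) with (s :: seq (S s) n). cbn [map Hval list_sum].
  rewrite IHn. rewrite length_map, length_seq. cbn [list_sum fold_right]. f_equal.
  - f_equal. f_equal. lia.
  - unfold list_sum. f_equal. apply map_ext_in. intros k Hk. apply in_seq in Hk.
    f_equal. f_equal. lia.
Qed.

Lemma list_sum_map_ext (f g : nat -> nat) l :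
  (forall x, In x l -> f x = g x) -> list_sum (map f l) = list_sum (map g l).
Proof. intros H. f_equal. apply map_ext_in. auto. Qed.

Lemma next_H_branch1 L n :
  S n <= length L + 1 ->
  Hn L (S n) = 1 + list_sum (map (fun k => acoef L k * Hn L (S n - k)) (seq 1 n)).
Proof.
  intros Hle. rewrite Hn_S. unfold next_H. rewrite Hlist_length.
  replace (S n <=? length L + 1) with true by (symmetry; apply Nat.leb_le; lia).
  f_equal. replace (S n - 1) with n by lia.
  apply list_sum_map_ext. intros k Hk. apply in_seq in Hk.
  f_equal. rewrite nth_Hlist by lia. f_equal. lia.
Qed.

Lemma next_H_branch2 L n :
  2 <= length L -> length L + 1 < S n ->
  Hn L (S n) = list_sum (map (fun k => acoef L k * Hn L (S n - k)) (seq 1 (length L - 1)))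
               + (1 + acoef L (length L)) * Hn L (S n - length L).
Proof.
  intros HN Hle. rewrite Hn_S. unfold next_H. rewrite Hlist_length.
  replace (S n <=? length L + 1) with false by (symmetry; apply Nat.leb_gt; lia).
  f_equal.
  - apply list_sum_map_ext. intros k Hk. apply in_seq in Hk.
    f_equal. rewrite nth_Hlist by lia. f_equal. lia.
  - f_equal. rewrite nth_Hlist by lia. f_equal. lia.
Qed.

Lemma Theta_small L k : 1 <= k <= length L -> Theta L k = acoef L k.
Proof.
  intros Hk. unfold Theta, acoef. f_equal. apply Nat.mod_small. lia.
Qed.

Lemma Theta_period L k : 1 <= length L -> 1 <= k -> Theta L (k + length L) = Theta L k.
Proof.
  intros HN Hk. unfold Theta. f_equal.
  replace (k + length L - 1) with ((k - 1) + 1 * length L) by lia.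
  rewrite Nat.Div0.mod_add. reflexivity.
Qed.

Lemma Theta_period_mul L k m : 1 <= length L -> 1 <= k -> Theta L (k + m * length L) = Theta L k.
Proof.
  intros HN Hk. induction m. rewrite Nat.add_0_r; auto.
  replace (k + S m * length L) with ((k + m * length L) + length L) by lia.
  rewrite Theta_period by lia. auto.
Qed.

Definition Theta_seg L j n := map (Theta L) (seq (S j) n).

Lemma Theta_seg_S L j n : Theta_seg L j (S n) = Theta L (S j) :: Theta_seg L (S j) n.
Proof. reflexivity. Qed.

Lemma Theta_seg_add L j a b : Theta_seg L j (a + b) = Theta_seg L j a ++ Theta_seg L (j + a) b.
Proof. unfold Theta_seg. rewrite seq_app, map_app. reflexivity. Qed.

Lemma Theta_seg_period L j n m : 1 <= length L -> Theta_seg L (j + m * length L) n = Theta_seg L j n.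
Proof.
  intros HN. unfold Theta_seg. revert j. induction n; intros j; simpl; auto.
  f_equal.
  - replace (S (j + m * length L)) with (S j + m * length L) by lia.
    apply Theta_period_mul; lia.
  - replace (S (j + m * length L)) with (S j + m * length L) by lia. apply IHn.
Qed.

Lemma Hn_S_Theta L n : 2 <= length L -> Hn L (S n) = S (Hval L (Theta_seg L 0 n) 0).
Proof.
  intros HN. induction n as [n IH] using lt_wf_ind.
  destruct (Nat.le_gt_cases n (length L)) as [Hle|Hgt].
  - rewrite next_H_branch1 by lia. unfold Theta_seg. rewrite Hval_map_seq. simpl.
    f_equal. apply list_sum_map_ext. intros k Hk. apply in_seq in Hk.
    rewrite Theta_small by lia. f_equal. f_equal. destruct k; lia.
  - rewrite next_H_branch2 by lia.
    assert (Hs : Theta_seg L 0 n = Theta_seg L 0 (length L) ++ Theta_seg L 0 (n - length L)).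
    { replace n with (length L + (n - length L)) at 1 by lia.
      rewrite Theta_seg_add. f_equal. rewrite <- (Theta_seg_period L 0 _ 1) by lia. f_equal; lia. }
    rewrite Hs, Hval_app. unfold Theta_seg at 2. rewrite length_map, length_seq, Nat.add_0_r.
    assert (IH' := IH (n - length L) ltac:(lia)).
    replace (S n - length L) with (S (n - length L)) by lia.
    rewrite IH'.
    assert (A : Hval L (Theta_seg L 0 (length L)) (n - length L) =
      (list_sum (map (fun k => acoef L k * Hn L (S n - k)) (seq 1 (length L - 1)))
       + acoef L (length L) * Hn L (S (n - length L)))).
    { unfold Theta_seg. rewrite Hval_map_seq.
      replace (seq 1 (length L)) with (seq 1 (length L - 1) ++ [length L]).
      2:{ replace (length L) with ((length L - 1) + 1) at 3 by lia.
          rewrite seq_app. f_equal. simpl. f_equal. lia. }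
      rewrite map_app, list_sum_app. cbn [map list_sum fold_right].
      rewrite Theta_small by lia. f_equal.
      - apply list_sum_map_ext. intros k Hk. apply in_seq in Hk. rewrite Theta_small by lia.
        f_equal. f_equal. lia.
      - rewrite Nat.add_0_r. f_equal. f_equal. lia. }
    rewrite A, IH'. nia.
Qed.

(* The automaton recognising [Hcirc L]: in state [j] the prefix [Theta_prefix L j] has just been
   read, and [Hcirc_from L j w] says that [w] may follow it. *)
Fixpoint Hcirc_from L (j : nat) (w : list nat) : Prop :=
  match w with
  | [] => True
  | d :: w' => (d = Theta L (S j) /\ Hcirc_from L (S j) w') \/ ((d < Theta L (S j)) /\ Hcirc_from L 0 w')
  end.

Fixpoint Hcirc_state L (j : nat) (w : list nat) : nat :=
  match w with
  | [] => j
  | d :: w' => if Nat.eqb d (Theta L (S j)) then Hcirc_state L (S j) w' else Hcirc_state L 0 w'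
  end.

Lemma Hcirc_from_app L j u v : Hcirc_from L j (u ++ v) <-> Hcirc_from L j u /\ Hcirc_from L (Hcirc_state L j u) v.
Proof.
  revert j. induction u as [|d u IH]; intros j; simpl.
  - tauto.
  - destruct (Nat.eqb_spec d (Theta L (S j))) as [E|E].
    + rewrite !IH. split.
      * intros [[_ H]|[H _]]; [tauto|lia].
      * intros [[[_ H1]|[H1 _]] H2]; [left; tauto| lia].
    + rewrite !IH. split.
      * intros [[H _]|[H1 H2]]; [congruence|tauto].
      * intros [[[H _]|[H1 H2]] H3]; [congruence|right; tauto].
Qed.

Lemma Hcirc_from_Theta_seg L j n : Hcirc_from L j (Theta_seg L j n).
Proof. revert j; induction n; intros j; simpl; auto. Qed.

Lemma Hcirc_state_Theta_seg L j n : Hcirc_state L j (Theta_seg L j n) = j + n.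
Proof.
  revert j; induction n; intros j; simpl; [lia|].
  rewrite Nat.eqb_refl. rewrite IHn. lia.
Qed.

Lemma Hcirc_from_repeat0 L j n : Hcirc_from L j (repeat 0 n).
Proof.
  revert j; induction n; intros j; simpl; auto.
  destruct (Theta L (S j)) eqn:E; [left|right]; split; auto; lia.
Qed.

Lemma Hcirc_from_prefix L j u v : Hcirc_from L j (u ++ v) -> Hcirc_from L j u.
Proof. rewrite Hcirc_from_app. tauto. Qed.

Lemma Hcirc_from_pad L j u n : Hcirc_from L j u -> Hcirc_from L j (u ++ repeat 0 n).
Proof. intros H. apply Hcirc_from_app. split; auto. apply Hcirc_from_repeat0. Qed.

Lemma Theta_prefix_S L j : Theta_prefix L (S j) = Theta_prefix L j ++ [Theta L (S j)].
Proof. unfold Theta_prefix. rewrite seq_S, map_app. reflexivity. Qed.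

Lemma Hcirc_from_of_Hcirc L w : Hcirc L w -> Hcirc_from L 0 w.
Proof.
  induction 1.
  - apply Hcirc_from_Theta_seg.
  - apply Hcirc_from_app. split. apply Hcirc_from_Theta_seg.
    change (Theta_prefix L s) with (Theta_seg L 0 s). rewrite Hcirc_state_Theta_seg. simpl.
    right. split; auto. replace (s + 1) with (S s) in H by lia. exact H.
Qed.

Lemma Hcirc_from_Hcirc L j w : Hcirc_from L j w -> Hcirc L (Theta_prefix L j ++ w).
Proof.
  revert j. induction w as [|d w IH]; intros j Hw.
  - rewrite app_nil_r. constructor.
  - destruct Hw as [[E Hw]|[E Hw]].
    + subst d. replace (Theta_prefix L j ++ Theta L (S j) :: w) with (Theta_prefix L (S j) ++ w).
      apply IH; auto. rewrite Theta_prefix_S, <- app_assoc. reflexivity.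
    + apply Hc_split. replace (j + 1) with (S j) by lia. exact E.
      apply (IH 0 Hw).
Qed.

Lemma Hcirc_iff L w : Hcirc L w <-> Hcirc_from L 0 w.
Proof. split. apply Hcirc_from_of_Hcirc. intros H. apply (Hcirc_from_Hcirc L 0 w H). Qed.

Lemma Theta_seg_length L j n : length (Theta_seg L j n) = n.
Proof. unfold Theta_seg. rewrite length_map, length_seq. reflexivity. Qed.

Lemma Hn_S_pos L n : 2 <= length L -> 1 <= Hn L (S n).
Proof. intros HN. rewrite Hn_S_Theta by auto. lia. Qed.

Lemma Hval_le_Theta_seg L j w : 2 <= length L -> Hcirc_from L j w -> Hval L w 0 <= Hval L (Theta_seg L j (length w)) 0.
Proof.
  intros HN. revert j. induction w as [|d w IH]; intros j Hw; [simpl; lia|].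
  change (length (d::w)) with (S (length w)). rewrite Theta_seg_S. cbn [Hval].
  rewrite Theta_seg_length.
  destruct Hw as [[E Hw]|[E Hw]].
  - subst d. specialize (IH _ Hw). lia.
  - specialize (IH _ Hw).
    assert (HH := Hn_S_Theta L (length w) HN).
    replace (length w + 0 + 1) with (S (length w)) by lia.
    nia.
Qed.

Lemma Hval_lt_Hn L w : 2 <= length L -> Hcirc_from L 0 w -> Hval L w 0 < Hn L (S (length w)).
Proof.
  intros HN Hw. assert (B := Hval_le_Theta_seg L 0 w HN Hw).
  rewrite Hn_S_Theta by auto. lia.
Qed.

Lemma Hval_lt_digit L p d e t t' : 2 <= length L ->
  Hcirc_from L 0 (p ++ d :: t) -> Hcirc_from L 0 (p ++ e :: t') -> length t = length t' -> d < e ->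
  Hval L (p ++ d :: t) 0 < Hval L (p ++ e :: t') 0.
Proof.
  intros HN H1 H2 Hl Hde.
  rewrite !Hval_app. simpl length. rewrite Hl.
  apply Hcirc_from_app in H1, H2. destruct H1 as [_ H1]. destruct H2 as [_ H2].
  set (j := Hcirc_state L 0 p) in *.
  assert (Hd : (d < Theta L (S j)) /\ Hcirc_from L 0 t).
  { destruct H2 as [[E _]|[E _]]; destruct H1 as [[E' _]|[E' H1']]; try lia; auto. }
  destruct Hd as [Hd Ht].
  assert (B := Hval_lt_Hn L t HN Ht).
  simpl. rewrite <- Hl.
  replace (length t + 0 + 1) with (S (length t)) by lia.
  nia.
Qed.

Lemma Hcirc_from_of_value L : 2 <= length L -> forall n j v, (v <= Hval L (Theta_seg L j n) 0) ->
  exists w, length w = n /\ Hcirc_from L j w /\ Hval L w 0 = v.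
Proof.
  intros HN n. induction n; intros j v Hv.
  - exists []. simpl in *. repeat split; auto. lia.
  - rewrite Theta_seg_S in Hv. cbn [Hval] in Hv. rewrite Theta_seg_length in Hv.
    replace (n + 0 + 1) with (S n) in Hv by lia.
    assert (HH := Hn_S_Theta L n HN).
    destruct (Nat.lt_ge_cases v (Theta L (S j) * Hn L (S n))) as [Hlt|Hge].
    + set (h := Hn L (S n)) in *.
      assert (hpos : 0 < h) by lia.
      destruct (IHn 0 (v mod h)) as [w [Hl [Ha Hv']]].
      { assert (v mod h < h) by (apply Nat.mod_upper_bound; lia). lia. }
      exists (v / h :: w). split; [simpl; lia|]. split.
      * right. split; auto. apply Nat.Div0.div_lt_upper_bound. lia.
      * simpl. rewrite Hl, Hv'. replace (n + 0 + 1) with (S n) by lia. fold h.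
        rewrite (Nat.div_mod v h) at 3 by lia. lia.
    + destruct (IHn (S j) (v - Theta L (S j) * Hn L (S n))) as [w [Hl [Ha Hv']]]; [lia|].
      exists (Theta L (S j) :: w). split; [simpl; lia|]. split.
      * left. auto.
      * simpl. rewrite Hl, Hv'. replace (n + 0 + 1) with (S n) by lia. lia.
Qed.

Lemma Hn_1 L : 2 <= length L -> Hn L 1 = 1.
Proof. intros HN. rewrite (Hn_S_Theta L 0 HN). reflexivity. Qed.

Lemma Theta_1_pos L : admissible L -> 0 < Theta L 1.
Proof.
  intros [HN Ha]. unfold Theta. rewrite Nat.sub_diag, Nat.Div0.mod_0_l. exact Ha.
Qed.

Lemma Hn_lt_S L n : admissible L -> 1 <= n -> Hn L n < Hn L (S n).
Proof.
  intros Hadm Hn1. assert (HN : 2 <= length L) by apply Hadm.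
  rewrite Hn_S_Theta by auto. destruct n; [lia|].
  rewrite Theta_seg_S. cbn [Hval]. rewrite Theta_seg_length.
  replace (n + 0 + 1) with (S n) by lia.
  assert (T := Theta_1_pos L Hadm). nia.
Qed.

Lemma Hn_ge L n : admissible L -> n <= Hn L n.
Proof.
  intros Hadm. induction n. lia.
  destruct n. rewrite Hn_1 by apply Hadm. lia.
  assert (X := Hn_lt_S L (S n) Hadm ltac:(lia)). lia.
Qed.

Lemma Hn_le_mono L a b : admissible L -> 1 <= a -> a <= b -> Hn L a <= Hn L b.
Proof.
  intros Hadm Ha Hab. induction Hab. lia.
  assert (X := Hn_lt_S L m Hadm ltac:(lia)). lia.
Qed.

Lemma Hn_bracket L m : admissible L -> 1 <= m ->
  exists n, (1 <= n) /\ Hn L n <= m < Hn L (S n).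
Proof.
  intros Hadm Hm. assert (HN : 2 <= length L) by apply Hadm.
  induction m. lia.
  destruct m.
  - exists 1. rewrite Hn_1 by auto. split; auto. assert (X := Hn_lt_S L 1 Hadm ltac:(lia)).
    rewrite Hn_1 in X by auto. lia.
  - destruct IHm as [n [Hn1 [Ha Hb]]]; [lia|].
    destruct (Nat.eq_dec (S (S m)) (Hn L (S n))) as [E|E].
    + exists (S n). split; [lia|]. assert (X := Hn_lt_S L (S n) Hadm ltac:(lia)). lia.
    + exists n. split; auto. lia.
Qed.

Lemma H_expansion_exists L m : admissible L -> 1 <= m ->
  exists w, Hcirc_from L 0 w /\ 0 < hd 0 w /\ Hval L w 0 = m /\ Hn L (length w) <= m.
Proof.
  intros Hadm Hm. assert (HN : 2 <= length L) by apply Hadm.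
  destruct (Hn_bracket L m Hadm Hm) as [n [Hn1 [Ha Hb]]].
  destruct (Hcirc_from_of_value L HN n 0 m) as [w [Hl [Hw Hv]]].
  { rewrite Hn_S_Theta in Hb by auto. lia. }
  exists w. split; auto. split; [|split; auto; rewrite Hl; auto].
  destruct w as [|d w]; simpl in Hl. lia.
  simpl. destruct d; [|lia].
  exfalso. destruct Hw as [[E _]|[_ Hw]].
  - assert (T := Theta_1_pos L Hadm). simpl in E. lia.
  - assert (B := Hval_lt_Hn L w HN Hw). simpl in Hv.
    replace (S (length w)) with n in B by lia. lia.
Qed.

Lemma Hvalue_Hval L w : Hvalue L w = Hval L w 0.
Proof.
  unfold Hvalue.
  assert (G : forall s, list_sum (map (fun k => nth (k - s) w 0 * Hn L (length w + s - k))
                                  (seq s (length w))) = Hval L w 0).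
  { induction w as [|d w IH]; intros s; [reflexivity|].
    change (seq s (length (d :: w))) with (s :: seq (S s) (length w)).
    cbn [map list_sum fold_right Hval]. rewrite Nat.sub_diag. simpl nth.
    rewrite <- (IH (S s)). f_equal.
    - f_equal. f_equal. change (length (d::w)) with (S (length w)); lia.
    - unfold list_sum. f_equal. apply map_ext_in. intros k Hk. apply in_seq in Hk.
      replace (k - s) with (S (k - S s)) by lia. simpl nth.
      f_equal. f_equal. change (length (d::w)) with (S (length w)); lia. }
  rewrite <- (G 1). f_equal. apply map_ext_in. intros k Hk. apply in_seq in Hk.
  f_equal. f_equal. lia.
Qed.

(** * Leading blocks *)

Lemma lexlt_irrefl x : ~ lexlt x x.
Proof. induction x; simpl; auto. intros [H|[_ H]]; [lia|auto]. Qed.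

Lemma lexlt_total x y : length x = length y -> x <> y -> lexlt x y \/ lexlt y x.
Proof.
  revert y; induction x as [|a x IH]; intros [|b y] Hl Hne; simpl in *; try lia.
  - congruence.
  - destruct (Nat.lt_trichotomy a b) as [H|[H|H]].
    + left; left; auto.
    + subst b. assert (x <> y) by congruence.
      destruct (IH y ltac:(lia) H) as [H1|H1]; [left|right]; right; auto.
    + right; left; auto.
Qed.

Lemma lexlt_app_r x y z : length x = length y -> lexlt (x ++ z) (y ++ z) -> lexlt x y.
Proof.
  revert y; induction x as [|a x IH]; intros [|b y] Hl H; simpl in *; try lia.
  - exfalso. apply (lexlt_irrefl z H).
  - destruct H as [H|[E H]]; [left; auto|right; split; auto].
Qed.

Lemma lexlt_decomp x y : length x = length y -> lexlt x y ->
  exists p d e t t', x = p ++ d :: t /\ y = p ++ e :: t' /\ d < e /\ length t = length t'.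
Proof.
  revert y; induction x as [|a x IH]; intros [|b y] Hl H; simpl in *; try lia; try tauto.
  destruct H as [H|[E H]].
  - exists [], a, b, x, y. simpl. repeat split; auto; lia.
  - subst b. destruct (IH y ltac:(lia) H) as [p [d [e [t [t' [H1 [H2 [H3 H4]]]]]]]].
    exists (a :: p), d, e, t, t'. subst. simpl. auto.
Qed.

Definition lead_block (L : list nat) (s : nat) (w : list nat) := firstn s w ++ repeat 0 (length L - s).
Definition pad_lead (s : nat) (w : list nat) (M : nat) := firstn s w ++ repeat 0 (M - s).

Lemma lead_block_length L s w : s <= length w -> length (lead_block L s w) = s + (length L - s).
Proof. intros H. unfold lead_block. rewrite length_app, length_firstn, repeat_length. lia. Qed.

Lemma pad_lead_length s w M : s <= length w -> s <= M -> length (pad_lead s w M) = M.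
Proof. intros H H'. unfold pad_lead. rewrite length_app, length_firstn, repeat_length. lia. Qed.

Lemma Hcirc_from_pad_lead L s w M : Hcirc_from L 0 w -> Hcirc_from L 0 (pad_lead s w M).
Proof.
  intros H. unfold pad_lead. apply Hcirc_from_pad. rewrite <- (firstn_skipn s w) in H.
  apply Hcirc_from_prefix in H. auto.
Qed.

Lemma firstn_pad_lead s w M : s <= length w -> firstn s (pad_lead s w M) = firstn s w.
Proof.
  intros H. unfold pad_lead. rewrite firstn_app. rewrite length_firstn.
  replace (s - Nat.min s (length w)) with 0 by lia. simpl. rewrite app_nil_r.
  rewrite firstn_firstn, Nat.min_id. reflexivity.
Qed.

Lemma Hval_pad_lead L s w M : s <= length w -> s + (length L - s) <= M ->
  Hval L (pad_lead s w M) 0 = Hval L (lead_block L s w) (M - length (lead_block L s w)).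
Proof.
  intros H1 H2. rewrite lead_block_length by auto. unfold pad_lead, lead_block.
  rewrite !Hval_app, !Hval_repeat0, !repeat_length. f_equal. f_equal. lia.
Qed.

Lemma Hval_pad_lead_le L s w : s <= length w -> Hval L (pad_lead s w (length w)) 0 <= Hval L w 0.
Proof.
  intros H. unfold pad_lead. rewrite Hval_pad.
  transitivity (Hval L (firstn s w ++ skipn s w) 0).
  - rewrite Hval_app, length_skipn, Nat.add_0_r. lia.
  - rewrite firstn_skipn. lia.
Qed.

Lemma Hval_lt_lexlt_prefix L s x y : 2 <= length L ->
  Hcirc_from L 0 x -> Hcirc_from L 0 y -> length x = length y -> s <= length x ->
  lexlt (firstn s x) (firstn s y) -> Hval L x 0 < Hval L y 0.
Proof.
  intros HN Hx Hy Hl Hs Hlex.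
  apply lexlt_decomp in Hlex.
  2:{ rewrite !length_firstn. lia. }
  destruct Hlex as [p [d [e [t [t' [E1 [E2 [Hde Ht]]]]]]]].
  rewrite <- (firstn_skipn s x) in Hx |- *. rewrite <- (firstn_skipn s y) in Hy |- *.
  rewrite E1, E2 in *. rewrite <- !app_assoc in *. simpl in *.
  apply Hval_lt_digit; auto.
  rewrite !length_app, Ht, !length_skipn. lia.
Qed.

Lemma Hs_lead_block L s b : Hs L s b ->
  exists w, Hcirc_from L 0 w /\ 0 < hd 0 w /\ s <= length w /\ b = lead_block L s w.
Proof.
  intros [m [Hm [eps [[[Hc Hh] Hv] [Hs E]]]]].
  exists eps. repeat split; auto; try lia. apply Hcirc_iff; auto.
Qed.

Lemma lead_block_Hs L s w : admissible L -> Hcirc_from L 0 w -> 0 < hd 0 w -> 1 <= s <= length w ->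
  Hs L s (lead_block L s w).
Proof.
  intros Hadm Hw Hh Hs. exists (Hval L w 0). split.
  - destruct w as [|d w]; simpl in *. lia.
    assert (X := Hn_S_pos L (length w + 0) ltac:(apply Hadm)).
    replace (S (length w + 0)) with (length w + 0 + 1) in X by lia. nia.
  - exists w. split; [|split; auto].
    split. split; auto. apply Hcirc_iff; auto. symmetry. apply Hvalue_Hval.
Qed.

Lemma L_Theta_seg L : L = Theta_seg L 0 (length L).
Proof.
  apply nth_ext with (d := 0) (d' := 0). rewrite Theta_seg_length. auto.
  intros i Hi. unfold Theta_seg. rewrite (nth_indep (map (Theta L) (seq 1 (length L))) 0 (Theta L 0)) by (rewrite length_map, length_seq; auto).
  rewrite map_nth, seq_nth by auto. unfold Theta.
  f_equal. rewrite Nat.mod_small; lia.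
Qed.

Lemma Hval_excl_prefix L q M : 2 <= length L -> 1 <= q -> q * length L <= M ->
  Hval L (Theta_seg L 0 (q * length L - 1) ++ [S (acoef L (length L))]) (M - q * length L) = Hn L (S M).
Proof.
  intros HN Hq HM. set (r := (q * length L)) in *.
  assert (Hr : length L <= r) by (unfold r; nia).
  rewrite (Hn_S_Theta L M HN).
  assert (E : Theta_seg L 0 M = Theta_seg L 0 (r - 1) ++ [Theta L r] ++ Theta_seg L 0 (M - r)).
  { replace M with ((r - 1) + 1 + (M - r)) at 1 by lia.
    rewrite !Theta_seg_add. rewrite <- app_assoc. f_equal. f_equal.
    - unfold Theta_seg. simpl. f_equal. f_equal. lia.
    - replace (0 + (r - 1 + 1)) with (0 + q * length L) by (unfold r; lia).
      apply Theta_seg_period. lia. }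
  assert (ETh : Theta L r = acoef L (length L)).
  { unfold r. replace (q * length L) with (length L + (q - 1) * length L) by nia.
    rewrite Theta_period_mul by lia. apply Theta_small. lia. }
  rewrite E, ETh. rewrite !Hval_app. cbn [Hval length app].
  rewrite ?length_app, ?Theta_seg_length. cbn [length].
  assert (X := Hn_S_Theta L (M - r) HN).
  replace (0 + (M - r + 0) + 1) with (S (M - r)) by lia.
  replace (0 + 0 + (M - r) + 1) with (S (M - r)) by lia.
  replace (0 + (M - r) + 1) with (S (M - r)) by lia.
  replace (S (M - r) + 0) with (1 + (M - r)) by lia.
  nia.
Qed.

Lemma removelast_Theta_seg L r : 1 <= r -> removelast (Theta_seg L 0 r) = Theta_seg L 0 (r - 1).
Proof.
  intros Hr. replace r with ((r - 1) + 1) at 1 by lia. rewrite Theta_seg_add.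
  unfold Theta_seg at 2. simpl. apply removelast_last.
Qed.

Lemma excl_block_Hval L s M : admissible L -> 1 <= s -> s + (length L - s) <= M ->
  length (excl_block L s) = (s + (length L - s)) /\
  Hval L (excl_block L s) (M - (s + (length L - s))) = Hn L (S M).
Proof.
  intros Hadm Hs HM. assert (HN : 2 <= length L) by apply Hadm.
  unfold excl_block. destruct (Nat.leb_spec (length L) s) as [Hle|Hgt].
  - set (p := (s mod length L)). set (q := (s / length L)).
    assert (Hsq : s = (q * length L + p)).
    { unfold p, q. rewrite (Nat.div_mod_eq s (length L)) at 1. lia. }
    assert (Hp : p < length L) by (unfold p; apply Nat.mod_upper_bound; lia).
    assert (Hq : 1 <= q) by nia.
    replace (s - p) with (q * length L) by lia.
    change (Theta_prefix L (q * length L)) with (Theta_seg L 0 (q * length L)).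
    rewrite removelast_Theta_seg by nia.
    split.
    + rewrite !length_app, Theta_seg_length, repeat_length. simpl. nia.
    + rewrite app_assoc, Hval_app, Hval_repeat0, repeat_length.
      replace (p + (M - (s + (length L - s)))) with (M - q * length L) by nia.
      rewrite Hval_excl_prefix by nia. lia.
  - assert (RL : removelast L = Theta_seg L 0 (length L - 1)).
    { rewrite <- removelast_Theta_seg by lia. f_equal. apply L_Theta_seg. }
    rewrite RL.
    replace (s + (length L - s)) with (1 * length L) by lia.
    replace (length L - 1) with (1 * length L - 1) by lia.
    split.
    + rewrite length_app, Theta_seg_length. simpl. lia.
    + apply Hval_excl_prefix; lia.
Qed.

Lemma lead_block_lexlt_firstn L s u v : s <= length u -> s <= length v ->
  lexlt (lead_block L s u) (lead_block L s v) -> lexlt (firstn s u) (firstn s v).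
Proof.
  intros Hu Hv H. unfold lead_block in H. apply lexlt_app_r in H; auto.
  rewrite !length_firstn. lia.
Qed.

Lemma Hval_lt_pad_lead L s w eps : 2 <= length L ->
  Hcirc_from L 0 w -> Hcirc_from L 0 eps -> s <= length w -> s <= length eps ->
  lexlt (lead_block L s eps) (lead_block L s w) ->
  Hval L eps 0 < Hval L (pad_lead s w (length eps)) 0.
Proof.
  intros HN Hw Heps Hsw Hse Hlt. apply Hval_lt_lexlt_prefix with (s := s); auto.
  - apply Hcirc_from_pad_lead; auto.
  - rewrite pad_lead_length; auto.
  - rewrite firstn_pad_lead by auto. apply lead_block_lexlt_firstn in Hlt; auto.
Qed.

Lemma Hval_pad_lead_lt L s w eps : 2 <= length L ->
  Hcirc_from L 0 w -> Hcirc_from L 0 eps -> s <= length w -> s <= length eps ->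
  lexlt (lead_block L s w) (lead_block L s eps) ->
  Hval L (pad_lead s w (length eps)) 0 < Hval L eps 0.
Proof.
  intros HN Hw Heps Hsw Hse Hlt. apply Hval_lt_lexlt_prefix with (s := s); auto.
  - apply Hcirc_from_pad_lead; auto.
  - rewrite pad_lead_length; auto.
  - rewrite pad_lead_length; auto.
  - rewrite firstn_pad_lead by auto. apply lead_block_lexlt_firstn in Hlt; auto.
Qed.

Section LeadingBlock.

Variables (L : list nat) (s : nat) (b b' : list nat).
Hypotheses (Hadm : admissible L) (Hs1 : 1 <= s) (Hb : Hs L s b) (Hsucc : succ_block L s b b').

Lemma Hval_lead_block_pad w M : s <= length w -> s + (length L - s) <= M ->
  Hval L (lead_block L s w) (M - length (lead_block L s w)) = Hval L (pad_lead s w M) 0.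
Proof. intros Hw HM. symmetry. apply Hval_pad_lead; auto. Qed.

Lemma lead_block_window eps : Hcirc_from L 0 eps -> s + (length L - s) <= length eps ->
  lead_block L s eps = b ->
  Hval L b (length eps - length b) <= Hval L eps 0 < Hval L b' (length eps - length b').
Proof.
  intros Heps HM E. assert (HN : 2 <= length L) by apply Hadm. split.
  - rewrite <- E, Hval_lead_block_pad by lia. apply Hval_pad_lead_le. lia.
  - destruct Hsucc as [[Hb'1 [Hlt _]]|[_ Ex]].
    + destruct (Hs_lead_block L s b' Hb'1) as [w' [Hw' [Hh' [Hs' E']]]].
      rewrite E', Hval_lead_block_pad by auto. rewrite <- E, E' in Hlt.
      apply Hval_lt_pad_lead; auto. lia.
    + subst b'. destruct (excl_block_Hval L s (length eps) Hadm Hs1 HM) as [Hl Hv].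
      rewrite Hl, Hv. apply Hval_lt_Hn; auto.
Qed.

Lemma lead_block_of_window eps : Hcirc_from L 0 eps -> 0 < hd 0 eps ->
  s + (length L - s) <= length eps ->
  Hval L b (length eps - length b) <= Hval L eps 0 < Hval L b' (length eps - length b') ->
  lead_block L s eps = b.
Proof.
  intros Heps Hh HM [H1 H2]. assert (HN : 2 <= length L) by apply Hadm.
  destruct (Hs_lead_block L s b Hb) as [wb [Hwb [Hhb [Hsb Eb]]]].
  assert (Hc : Hs L s (lead_block L s eps)) by (apply lead_block_Hs; auto; lia).
  destruct (list_eq_dec Nat.eq_dec (lead_block L s eps) b) as [E|Ne]; auto. exfalso.
  assert (Hlen : length (lead_block L s eps) = length b)
    by (rewrite Eb, !lead_block_length; lia).
  destruct (lexlt_total _ _ Hlen Ne) as [Hlt|Hlt].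
  - rewrite Eb, Hval_lead_block_pad in H1 by auto. rewrite Eb in Hlt.
    pose proof (Hval_lt_pad_lead L s wb eps HN Hwb Heps Hsb ltac:(lia) Hlt). lia.
  - destruct Hsucc as [[Hb'1 [Hlt' Hmin]]|[Hmax Ex]].
    + destruct (Hs_lead_block L s b' Hb'1) as [w' [Hw' [Hh' [Hs' E']]]].
      rewrite E' in H2, Hmin. destruct (Hmin _ Hc Hlt) as [Hlt2|Eq].
      * rewrite Hval_lead_block_pad in H2 by auto.
        pose proof (Hval_pad_lead_lt L s w' eps HN Hw' Heps Hs' ltac:(lia) Hlt2). lia.
      * rewrite Eq, Hval_lead_block_pad in H2 by lia.
        pose proof (Hval_pad_lead_le L s eps ltac:(lia)). lia.
    + exact (Hmax _ Hc Hlt).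
Qed.

End LeadingBlock.

Lemma Hn_rec L m : 2 <= length L -> length L <= m ->
  Hn L (S m) = Hval L (Theta_seg L 0 (length L)) (m - length L) + Hn L (S (m - length L)).
Proof.
  intros HN Hm. rewrite (Hn_S_Theta L m HN), (Hn_S_Theta L (m - length L) HN).
  replace (Theta_seg L 0 m) with (Theta_seg L 0 (length L) ++ Theta_seg L 0 (m - length L)).
  - rewrite Hval_app, Theta_seg_length, Nat.add_0_r. lia.
  - replace m with (length L + (m - length L)) at 2 by lia.
    rewrite Theta_seg_add. f_equal. rewrite <- (Theta_seg_period L 0 _ 1) by lia. f_equal; lia.
Qed.

Lemma Hn_le_Hval_lead L w : 0 < hd 0 w -> Hn L (length w) <= Hval L w 0.
Proof.
  intros Hh. destruct w as [|d w]; simpl in *; [lia|].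
  replace (length w + 0 + 1) with (S (length w)) by lia. nia.
Qed.

Lemma hd_pad_lead s w M : 1 <= s -> hd 0 (pad_lead s w M) = hd 0 w.
Proof.
  intros H. destruct s; [lia|]. unfold pad_lead. destruct w; simpl; auto.
  destruct (M - S s); reflexivity.
Qed.

Lemma Hcirc_from_length_ge L w M : admissible L -> 1 <= M -> Hcirc_from L 0 w ->
  Hn L M <= Hval L w 0 -> M <= length w.
Proof.
  intros Hadm HM Hw Hv. pose proof (Hval_lt_Hn L w ltac:(apply Hadm) Hw).
  destruct (Nat.le_gt_cases M (length w)) as [H'|H']; auto.
  pose proof (Hn_le_mono L (S (length w)) M Hadm ltac:(lia) ltac:(lia)). lia.
Qed.

Open Scope R_scope.

(** * Growth of H *)

Definition Theta_weight L (t : R) := sumR (map (fun k => INR (Theta L k) * t ^ k) (seq 1 (length L))).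

Lemma Theta_weight_psi L psi : admissible L -> is_psi L psi ->
  Theta_weight L (/ psi) + (/ psi) ^ length L = 1.
Proof.
  intros [HN Ha] [Hp E]. set (N := length L) in *. set (t := / psi).
  assert (Ht : 0 < t) by (apply Rinv_0_lt_compat; auto).
  assert (Hpt : psi * t = 1) by (unfold t; field; lra).
  assert (E2 : (psi ^ N - sumR (map (fun k => INR (acoef L k) * psi ^ (N - k)) (seq 1 (N - 1)))
                - (1 + INR (acoef L N))) * t ^ N = 0) by (rewrite E; ring).
  rewrite Rmult_minus_distr_r, Rmult_minus_distr_r in E2.
  rewrite <- Rpow_mult_distr, Hpt, pow1 in E2.
  rewrite Rmult_comm, <- sumR_scale in E2.
  assert (E3 : sumR (map (fun x => t ^ N * (INR (acoef L x) * psi ^ (N - x))) (seq 1 (N - 1)))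
             = sumR (map (fun k => INR (Theta L k) * t ^ k) (seq 1 (N - 1)))).
  { apply sumR_map_ext. intros k Hk. apply in_seq in Hk. rewrite Theta_small by (unfold N in *; lia).
    replace N with ((N - k) + k)%nat at 1 by lia. rewrite pow_add.
    transitivity (INR (acoef L k) * (t * psi) ^ (N - k) * t ^ k); [|rewrite Rmult_comm with (r1 := t), Hpt, pow1; ring].
    rewrite Rpow_mult_distr. ring. }
  rewrite E3 in E2.
  unfold Theta_weight. fold N. replace N with (S (N - 1)) at 1 by lia. rewrite seq_S, map_app, sumR_app.
  simpl. replace (S (N - 1)) with N by lia. rewrite Theta_small by (unfold N in *; lia).
  fold N. assert (TT : t * t ^ (N-1) = t ^ N) by (rewrite tech_pow_Rmult; f_equal; lia).
  rewrite TT. lra.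
Qed.

Lemma psi_gt1 L psi : admissible L -> is_psi L psi -> 1 < psi.
Proof.
  intros Hadm Hpsi. assert (I := Theta_weight_psi L psi Hadm Hpsi).
  destruct Hpsi as [Hp _]. destruct Hadm as [HN Ha].
  destruct (Rlt_or_le 1 psi) as [H|H]; auto. exfalso.
  assert (Ht : 1 <= / psi).
  { rewrite <- Rinv_1. apply Rinv_le_contravar; lra. }
  unfold Theta_weight in I. replace (length L) with (S (length L - 1)) in I at 1 by lia.
  simpl in I. unfold Theta in I. rewrite Nat.sub_diag, Nat.Div0.mod_0_l in I.
  assert (0 <= sumR (map (fun k => INR (nth ((k - 1) mod length L) L 0%nat) * (/ psi) ^ k) (seq 2 (length L - 1)))).
  { apply sumR_nonneg. intros. apply Rmult_le_pos. apply pos_INR. apply pow_le. lra. }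
  assert (1 <= INR (nth 0 L 0%nat)) by (apply (le_INR 1); lia).
  assert (0 < (/ psi) ^ length L) by (apply pow_lt; lra).
  assert (INR (nth 0 L 0%nat) * (/ psi * 1) >= 1) by (rewrite Rmult_1_r; nra).
  lra.
Qed.

Definition Hscaled L (t : R) (n : nat) : R := INR (Hn L n) * t ^ n.

Lemma Hscaled_rec L t m : (2 <= length L)%nat -> (length L <= m)%nat ->
  Hscaled L t (S m) =
  sumR (map (fun k => INR (Theta L k) * t ^ k * Hscaled L t (S m - k)%nat) (seq 1 (length L)))
  + t ^ length L * Hscaled L t (S m - length L)%nat.
Proof.
  intros HN Hm. unfold Hscaled. rewrite (Hn_rec L m HN Hm), plus_INR.
  unfold Theta_seg. rewrite Hval_map_seq, sumR_INR, Rmult_plus_distr_r.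
  f_equal.
  - rewrite Rmult_comm, <- sumR_scale. apply sumR_map_ext. intros k Hk. apply in_seq in Hk.
    rewrite mult_INR. replace (length L + 1 + (m - length L) - k)%nat with (S m - k)%nat by lia.
    replace (S m) with ((S m - k) + k)%nat at 1 by lia. rewrite pow_add. ring.
  - replace (S (m - length L)) with (S m - length L)%nat by lia.
    replace (S m) with ((S m - length L) + length L)%nat at 2 by lia. rewrite pow_add. ring.
Qed.

Lemma Hscaled_sub L t m y : (2 <= length L)%nat -> (length L <= m)%nat ->
  Theta_weight L t + t ^ length L = 1 ->
  Hscaled L t (S m) - y =
  sumR (map (fun k => INR (Theta L k) * t ^ k * (Hscaled L t (S m - k)%nat - y)) (seq 1 (length L)))
  + t ^ length L * (Hscaled L t (S m - length L)%nat - y).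
Proof.
  intros HN Hm Hw. rewrite Hscaled_rec by auto.
  replace (map (fun k => INR (Theta L k) * t ^ k * (Hscaled L t (S m - k)%nat - y)) (seq 1 (length L)))
    with (map (fun k => INR (Theta L k) * t ^ k * Hscaled L t (S m - k)%nat
                        - y * (INR (Theta L k) * t ^ k)) (seq 1 (length L)))
    by (apply map_ext; intros; ring).
  rewrite sumR_minus, sumR_scale. fold (Theta_weight L t).
  replace y with (y * (Theta_weight L t + t ^ length L)) at 1 by (rewrite Hw; ring). ring.
Qed.

Lemma Theta_weight_first_le L t x : (2 <= length L)%nat -> 0 <= t ->
  (forall k, (1 <= k <= length L)%nat -> 0 <= x k) ->
  INR (Theta L 1) * t * x 1%nat <= sumR (map (fun k => INR (Theta L k) * t ^ k * x k) (seq 1 (length L))).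
Proof.
  intros HN Ht Hx. replace (length L) with (S (length L - 1)) at 1 by lia. simpl.
  assert (0 <= sumR (map (fun k => INR (Theta L k) * t ^ k * x k) (seq 2 (length L - 1)))).
  { apply sumR_nonneg. intros k Hk. apply in_seq in Hk.
    apply Rmult_le_pos; [apply Rmult_le_pos; [apply pos_INR|apply pow_le; lra]|apply Hx; lia]. }
  rewrite Rmult_1_r. lra.
Qed.

Lemma Hscaled_renewal_bounds L psi : admissible L -> is_psi L psi ->
  renewal_bounds (Hscaled L (/ psi)) (length L) (length L + 2) (INR (Theta L 1) * / psi).
Proof.
  intros Hadm Hpsi. assert (HN : (2 <= length L)%nat) by apply Hadm.
  pose proof (psi_gt1 L psi Hadm Hpsi) as Hp1. pose proof (Theta_weight_psi L psi Hadm Hpsi) as Hw.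
  set (t := / psi) in *.
  assert (Ht : 0 < t) by (unfold t; apply Rinv_0_lt_compat; lra).
  assert (HtN : 0 < t ^ length L) by (apply pow_lt; lra).
  intros n Hn lo hi Hwin. destruct n as [|m]; [lia|]. replace (S m - 1)%nat with m by lia.
  pose proof (Hwin (length L) ltac:(lia)) as HwinN. split.
  - rewrite (Hscaled_sub L t m lo) by (auto; lia).
    pose proof (Theta_weight_first_le L t (fun k => Hscaled L t (S m - k)%nat - lo) HN ltac:(lra)
      ltac:(intros k Hk; specialize (Hwin k Hk); lra)) as A.
    cbv beta in A. replace (S m - 1)%nat with m in A by lia. nra.
  - replace (hi - Hscaled L t (S m)) with (- (Hscaled L t (S m) - hi)) by ring.
    rewrite (Hscaled_sub L t m hi) by (auto; lia).
    pose proof (Theta_weight_first_le L t (fun k => hi - Hscaled L t (S m - k)%nat) HN ltac:(lra)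
      ltac:(intros k Hk; specialize (Hwin k Hk); lra)) as A.
    cbv beta in A. replace (S m - 1)%nat with m in A by lia.
    replace (map (fun k => INR (Theta L k) * t ^ k * (Hscaled L t (S m - k)%nat - hi)) (seq 1 (length L)))
      with (map (fun k => -1 * (INR (Theta L k) * t ^ k * (hi - Hscaled L t (S m - k)%nat))) (seq 1 (length L)))
      by (apply map_ext; intros; ring).
    rewrite sumR_scale. nra.
Qed.

Theorem Hscaled_cv L psi : admissible L -> is_psi L psi ->
  exists c, 0 < c /\ Un_cv (Hscaled L (/ psi)) c.
Proof.
  intros Hadm Hpsi. assert (HN : (2 <= length L)%nat) by apply Hadm.
  pose proof (psi_gt1 L psi Hadm Hpsi) as Hp1.
  assert (Hw : 0 < INR (Theta L 1) * / psi <= 1).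
  { pose proof (Theta_weight_psi L psi Hadm Hpsi) as Hid.
    pose proof (Theta_weight_first_le L (/ psi) (fun _ => 1) HN
      ltac:(left; apply Rinv_0_lt_compat; lra) ltac:(intros; lra)) as A.
    assert (0 < (/ psi) ^ length L) by (apply pow_lt, Rinv_0_lt_compat; lra).
    assert (0 < INR (Theta L 1)) by (apply (lt_INR 0), Theta_1_pos; auto).
    assert (0 < / psi) by (apply Rinv_0_lt_compat; lra).
    unfold Theta_weight in Hid.
    rewrite (map_ext (fun k => INR (Theta L k) * (/ psi) ^ k * 1) (fun k => INR (Theta L k) * (/ psi) ^ k))
      in A by (intros; ring).
    split; [nra|lra]. }
  destruct (renewal_cv (Hscaled L (/ psi)) (length L) (length L + 2) _ ltac:(lia) ltac:(lia) Hw
    (Hscaled_renewal_bounds L psi Hadm Hpsi)) as [c [Hc Hcmin]].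
  exists c. split; auto. eapply Rlt_le_trans; [|apply Hcmin].
  apply win_min_pos. intros i Hi. unfold Hscaled.
  apply Rmult_lt_0_compat; [|apply pow_lt, Rinv_0_lt_compat; lra].
  replace (length L + 2 - 1 - i)%nat with (S (length L + 2 - 2 - i)) by lia.
  apply (lt_INR 0). pose proof (Hn_S_pos L (length L + 2 - 2 - i) HN). lia.
Qed.

Lemma dotH_cons t d w : dotH t (d :: w) = INR d + t * dotH t w.
Proof.
  unfold dotH. simpl length. change (seq 1 (S (length w))) with (1%nat :: seq 2 (length w)).
  cbn [map sumR fold_right]. simpl nth. rewrite pow_O, Rmult_1_r. f_equal.
  rewrite <- sumR_scale. rewrite <- seq_shift, map_map. apply sumR_map_ext.
  intros k Hk. apply in_seq in Hk. replace (S k - 1)%nat with (S (k - 1)) by lia.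
  simpl nth. simpl pow. ring.
Qed.

Theorem Hval_scaled_cv L t c : Un_cv (Hscaled L t) c -> forall b,
  Un_cv (fun r => INR (Hval L b r) * t ^ (length b + r)) (c * dotH t b).
Proof.
  intros Hc b. induction b as [|d b IH].
  - apply (Un_cv_ext (fun _ => 0)); [intros; simpl; ring|].
    replace (c * dotH t []) with 0 by (unfold dotH; simpl; ring). apply Un_cv_const.
  - rewrite dotH_cons.
    replace (c * (INR d + t * dotH t b)) with (INR d * c + t * (c * dotH t b)) by ring.
    apply (Un_cv_ext (fun r => INR d * Hscaled L t (r + (length b + 1))%nat
                               + t * (INR (Hval L b r) * t ^ (length b + r)))).
    + intros r. cbn [Hval length]. rewrite plus_INR, mult_INR. unfold Hscaled.
      replace (length b + r + 1)%nat with (r + (length b + 1))%nat by lia.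
      replace (S (length b) + r)%nat with (r + (length b + 1))%nat by lia.
      replace (r + (length b + 1))%nat with (S (length b + r)) by lia. simpl. ring.
    + apply CV_plus; apply CV_mult; auto using Un_cv_const, CV_shift'.
Qed.

Lemma floor_nat_spec x : 0 <= x -> INR (floor_nat x) <= x < INR (floor_nat x) + 1.
Proof.
  intros H. unfold floor_nat. rewrite INR_IZR_INZ, Z2Nat.id by (apply Int_part_nonneg; auto).
  apply Int_part_bounds.
Qed.

Lemma pow_bernoulli g n : 1 < g -> 1 + INR n * (g - 1) <= g ^ n.
Proof.
  intros Hg. induction n. simpl. lra.
  rewrite S_INR. simpl. assert (1 <= g ^ n) by (apply pow_R1_Rle; lra). nra.
Qed.

Lemma floor_pow_ge1 g n : 1 < g -> (1 <= floor_nat (g ^ n))%nat.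
Proof.
  intros Hg. assert (1 <= g ^ n) by (apply pow_R1_Rle; lra).
  destruct (floor_nat_spec (g ^ n) ltac:(lra)) as [A B].
  assert (0 < INR (floor_nat (g ^ n))) by lra.
  destruct (floor_nat (g ^ n)); [simpl in *; lra|lia].
Qed.

Lemma ln_floor_pow_asymptotics g : 1 < g ->
  Un_cv (fun n => ln (INR (floor_nat (g ^ n))) - INR n * ln g) 0.
Proof.
  intros Hg.
  assert (Hr : Un_cv (fun n => INR (floor_nat (g ^ n)) / g ^ n) 1).
  { intros e He.
    assert (Hab : Rabs (/ g) < 1).
    { rewrite Rabs_right by (left; apply Rinv_0_lt_compat; lra).
      rewrite <- Rinv_1. apply Rinv_lt_contravar; lra. }
    destruct (pow_lt_1_zero (/ g) Hab e He) as [M HM].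
    exists M. intros n Hn. unfold R_dist. specialize (HM n Hn).
    assert (Hgn : 1 <= g ^ n) by (apply pow_R1_Rle; lra).
    destruct (floor_nat_spec (g ^ n) ltac:(lra)) as [A B].
    rewrite pow_inv in HM. rewrite Rabs_right in HM by (left; apply Rinv_0_lt_compat; lra).
    replace (INR (floor_nat (g ^ n)) / g ^ n - 1) with ((INR (floor_nat (g ^ n)) - g ^ n) * / g ^ n) by (field; lra).
    rewrite Rabs_mult, Rabs_right with (r := / g ^ n) by (left; apply Rinv_0_lt_compat; lra).
    assert (Rabs (INR (floor_nat (g ^ n)) - g ^ n) <= 1) by (apply Rabs_le; lra).
    assert (0 < / g ^ n) by (apply Rinv_0_lt_compat; lra).
    assert (0 <= Rabs (INR (floor_nat (g ^ n)) - g ^ n)) by apply Rabs_pos. nra. }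
  assert (Hl := ln_cv _ 1 ltac:(lra) Hr). rewrite ln_1 in Hl.
  intros e He. destruct (Hl e He) as [M HM]. exists M. intros n Hn. specialize (HM n Hn).
  unfold R_dist in *. 
  assert (Hgn : 1 <= g ^ n) by (apply pow_R1_Rle; lra).
  assert (HK := floor_pow_ge1 g n Hg). assert (0 < INR (floor_nat (g ^ n))) by (apply (lt_INR 0); lia).
  unfold Rdiv in HM. rewrite ln_mult, ln_Rinv, ln_pow in HM by (try apply Rinv_0_lt_compat; lra).
  rewrite Rminus_0_r. rewrite Rminus_0_r in HM. replace (ln (INR (floor_nat (g ^ n))) - INR n * ln g)
    with (ln (INR (floor_nat (g ^ n))) + - (INR n * ln g)) by ring. auto.
Qed.

Lemma ln_ratio_irrational g L psi : 1 < g -> admissible L -> is_psi L psi ->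
  (forall r : Q, g <> Rpower psi (Q2R r)) -> irrational (ln g / ln psi).
Proof.
  intros Hg Hadm Hpsi Hnr p q Hq E.
  assert (Hp1 := psi_gt1 L psi Hadm Hpsi).
  assert (Hlp : 0 < ln psi) by (rewrite <- ln_1; apply ln_increasing; lra).
  destruct q as [|q']; [lia|].
  apply (Hnr (p # Pos.of_succ_nat q')%Q).
  unfold Rpower, Q2R. cbn [Qnum Qden].
  replace (IZR (Z.pos (Pos.of_succ_nat q'))) with (INR (S q')).
  2:{ rewrite INR_IZR_INZ. reflexivity. }
  assert (0 < INR (S q')) by (apply (lt_INR 0); lia).
  replace (IZR p * / INR (S q') * ln psi) with (ln g).
  - rewrite exp_ln; lra.
  - rewrite <- E. field. lra.
Qed.
Lemma floor_pow_unbounded g X : 1 < g -> exists n0, forall n, (n0 <= n)%nat -> (X <= floor_nat (g ^ n))%nat.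
Proof.
  intros Hg. destruct (INR_unbounded ((INR X + 1) / (g - 1))) as [n0 Hn0]. exists n0. intros n Hn.
  pose proof (pow_bernoulli g n Hg).
  destruct (floor_nat_spec (g ^ n) ltac:(pose proof (pow_R1_Rle g n); lra)) as [_ F].
  assert (INR n0 <= INR n) by (apply le_INR; auto).
  assert ((INR X + 1) / (g - 1) * (g - 1) = INR X + 1) by (field; lra).
  assert (INR X < INR (floor_nat (g ^ n))) by nra. apply INR_lt in H2. lia.
Qed.

Lemma ln_scaled_asymptotics (X : nat -> R) psi a S0 : 0 < psi -> 0 < a ->
  (forall M, (S0 <= M)%nat -> 0 < X M) ->
  Un_cv (fun r => X (S0 + r)%nat * (/ psi) ^ (S0 + r)) a ->
  forall e, 0 < e -> exists M0, (S0 <= M0)%nat /\ forall M, (M0 <= M)%nat ->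
    Rabs (ln (X M) - (INR M * ln psi + ln a)) < e.
Proof.
  intros Hp Ha HX Hcv e He.
  destruct (ln_cv _ a Ha Hcv e He) as [M1 HM1]. exists (S0 + M1)%nat. split; [lia|].
  intros M HM. specialize (HM1 (M - S0)%nat ltac:(lia)). unfold R_dist in HM1.
  replace (S0 + (M - S0))%nat with M in HM1 by lia.
  assert (0 < X M) by (apply HX; lia).
  rewrite ln_mult, ln_pow, ln_Rinv in HM1 by (try apply pow_lt; try apply Rinv_0_lt_compat; lra).
  replace (ln (X M) - (INR M * ln psi + ln a)) with (ln (X M) + INR M * - ln psi - ln a) by ring.
  auto.
Qed.

(** * Leading blocks of floor (gamma ^ n) *)

Section BlockAsymptotics.

Variables (L : list nat) (psi c : R) (s : nat) (b b' : list nat).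
Hypotheses (Hadm : admissible L) (Hpsi : is_psi L psi) (Hc0 : 0 < c)
  (Hcv : Un_cv (Hscaled L (/ psi)) c)
  (Hs1 : (1 <= s)%nat) (Hb : Hs L s b) (Hsucc : succ_block L s b b').

Let blen := (s + (length L - s))%nat.

Lemma block_lengths : length b = blen /\ length b' = blen.
Proof.
  destruct (Hs_lead_block L s b Hb) as [wb [_ [_ [Hsb Eb]]]]. split.
  - rewrite Eb. apply lead_block_length; auto.
  - destruct Hsucc as [[Hb'1 _]|[_ E]].
    + destruct (Hs_lead_block L s b' Hb'1) as [w' [_ [_ [Hs' E']]]].
      rewrite E'. apply lead_block_length; auto.
    + rewrite E. apply (excl_block_Hval L s blen Hadm Hs1). unfold blen; lia.
Qed.

Lemma block_values_between M : (blen <= M)%nat ->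
  (Hn L M <= Hval L b (M - blen) /\ Hval L b (M - blen) <= Hval L b' (M - blen) /\
   Hval L b' (M - blen) <= Hn L (S M))%nat.
Proof.
  intros HM. assert (HN : (2 <= length L)%nat) by apply Hadm.
  destruct block_lengths as [Lb Lb'].
  destruct (Hs_lead_block L s b Hb) as [wb [Hwb [Hhb [Hsb Eb]]]].
  set (eps := pad_lead s wb M).
  assert (Hl : length eps = M) by (apply pad_lead_length; unfold blen in *; lia).
  assert (Hh : (0 < hd 0%nat eps)%nat) by (unfold eps; rewrite hd_pad_lead; auto).
  assert (Ev : Hval L eps 0 = Hval L b (M - blen)).
  { unfold eps. rewrite Hval_pad_lead by (auto; unfold blen in *; lia). rewrite <- Eb, Lb. reflexivity. }
  pose proof (lead_block_window L s b b' Hadm Hs1 Hsucc eps (Hcirc_from_pad_lead L s wb M Hwb)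
    ltac:(rewrite Hl; unfold blen in *; lia) ltac:(rewrite Eb; unfold lead_block, eps; now rewrite firstn_pad_lead))
    as Hwin.
  rewrite Hl, Lb, Lb' in Hwin. pose proof (Hn_le_Hval_lead L eps Hh). rewrite Hl in H.
  assert (Hval L b' (M - blen) <= Hn L (S M))%nat; [|lia].
  destruct Hsucc as [[Hb'1 _]|[_ E]].
  - destruct (Hs_lead_block L s b' Hb'1) as [w' [Hw' [Hh' [Hs' E']]]].
    pose proof (Hval_lt_Hn L (pad_lead s w' M) HN (Hcirc_from_pad_lead L s w' M Hw')) as X.
    rewrite pad_lead_length in X by (unfold blen in *; lia).
    rewrite Hval_pad_lead, <- E', Lb' in X by (auto; unfold blen in *; lia). lia.
  - rewrite E. destruct (excl_block_Hval L s M Hadm Hs1 ltac:(unfold blen in *; lia)) as [_ X].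
    unfold blen. lia.
Qed.

Lemma block_scaled_cv w : length w = blen ->
  Un_cv (fun r => INR (Hval L w (blen + r - blen)) * (/ psi) ^ (blen + r)) (c * dotH (/ psi) w).
Proof.
  intros Hw. apply (Un_cv_ext (fun r => INR (Hval L w r) * (/ psi) ^ (length w + r))).
  - intros r. rewrite Hw. do 3 f_equal. lia.
  - apply Hval_scaled_cv. auto.
Qed.

Lemma Hn_block_scaled_cv :
  Un_cv (fun r => INR (Hn L (blen + r)) * (/ psi) ^ (blen + r)) c.
Proof.
  apply (Un_cv_ext (fun r => Hscaled L (/ psi) (r + blen))).
  - intros r. unfold Hscaled. now rewrite Nat.add_comm.
  - apply CV_shift'. auto.
Qed.

Lemma Hn_S_block_scaled_cv :
  Un_cv (fun r => INR (Hn L (S (blen + r))) * (/ psi) ^ (blen + r)) (c * psi).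
Proof.
  pose proof (psi_gt1 L psi Hadm Hpsi).
  apply (Un_cv_ext (fun r => Hscaled L (/ psi) (r + S blen) * psi)).
  - intros r. unfold Hscaled. replace (r + S blen)%nat with (S (blen + r)) by lia. simpl.
    field. lra.
  - apply CV_mult; [apply CV_shift'; auto|apply Un_cv_const].
Qed.

Lemma dotH_block_bounds : 1 <= dotH (/ psi) b <= dotH (/ psi) b' /\ dotH (/ psi) b' <= psi.
Proof.
  destruct block_lengths as [Lb Lb'].
  assert (Cmp : forall (X Y : nat -> nat) l1 l2, (forall r, (X (blen + r) <= Y (blen + r))%nat) ->
            Un_cv (fun r => INR (X (blen + r)%nat) * (/ psi) ^ (blen + r)) l1 ->
            Un_cv (fun r => INR (Y (blen + r)%nat) * (/ psi) ^ (blen + r)) l2 -> l1 <= l2).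
  { intros X Y l1 l2 HXY C1 C2. eapply Rle_cv_lim; [|exact C1|exact C2].
    intros r. apply Rmult_le_compat_r; [apply pow_le; left; apply Rinv_0_lt_compat|apply le_INR; auto].
    pose proof (psi_gt1 L psi Hadm Hpsi). lra. }
  pose proof (block_scaled_cv b Lb) as Cb. pose proof (block_scaled_cv b' Lb') as Cb'.
  assert (I1 : c * 1 <= c * dotH (/ psi) b).
  { rewrite Rmult_1_r. apply (Cmp (Hn L) (fun M => Hval L b (M - blen))); auto using Hn_block_scaled_cv.
    intros r. apply block_values_between. lia. }
  assert (I2 : c * dotH (/ psi) b <= c * dotH (/ psi) b').
  { apply (Cmp (fun M => Hval L b (M - blen)) (fun M => Hval L b' (M - blen))); auto.
    intros r. apply block_values_between. lia. }
  assert (I3 : c * dotH (/ psi) b' <= c * psi).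
  { apply (Cmp (fun M => Hval L b' (M - blen)) (fun M => Hn L (S M))); auto using Hn_S_block_scaled_cv.
    intros r. apply block_values_between. lia. }
  apply Rmult_le_reg_l in I1, I2, I3; auto.
Qed.

Lemma ln_dotH_ratio_bounds :
  0 <= ln (dotH (/ psi) b) / ln psi <= ln (dotH (/ psi) b') / ln psi /\
  ln (dotH (/ psi) b') / ln psi <= 1.
Proof.
  pose proof (psi_gt1 L psi Hadm Hpsi) as Hp1.
  assert (Hlp0 : 0 < ln psi) by (rewrite <- ln_1; apply ln_increasing; lra).
  assert (Hlp : 0 < / ln psi) by (apply Rinv_0_lt_compat; lra).
  destruct dotH_block_bounds as [[Hdb Hdb'] Hdb''].
  unfold Rdiv. repeat split.
  - apply Rmult_le_pos; [rewrite <- ln_1; apply ln_le_pos|]; lra.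
  - apply Rmult_le_compat_r; [lra|apply ln_le_pos; lra].
  - rewrite <- (Rinv_r (ln psi)) by lra. apply Rmult_le_compat_r; [lra|apply ln_le_pos; lra].
Qed.

Definition block_regime (e : R) (M0 : nat) : Prop :=
  (blen <= M0)%nat /\ forall M, (M0 <= M)%nat ->
  Rabs (ln (INR (Hn L M)) - (INR M * ln psi + ln c)) < e /\
  Rabs (ln (INR (Hn L (S M))) - (INR M * ln psi + ln (c * psi))) < e /\
  Rabs (ln (INR (Hval L b (M - blen))) - (INR M * ln psi + ln (c * dotH (/ psi) b))) < e /\
  Rabs (ln (INR (Hval L b' (M - blen))) - (INR M * ln psi + ln (c * dotH (/ psi) b'))) < e.

Lemma block_regime_exists e : 0 < e -> exists M0, block_regime e M0.
Proof.
  intros He. pose proof (psi_gt1 L psi Hadm Hpsi) as Hp1.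
  destruct block_lengths as [Lb Lb']. destruct dotH_block_bounds as [[Hdb Hdb'] _].
  assert (Hpos : forall X : nat -> nat, (forall M, (blen <= M)%nat -> (Hn L M <= X M)%nat) ->
            forall M, (blen <= M)%nat -> 0 < INR (X M)).
  { intros X HX M HM. apply (lt_INR 0). pose proof (HX M HM). pose proof (Hn_ge L M Hadm).
    unfold blen in HM. lia. }
  destruct (ln_scaled_asymptotics (fun M => INR (Hn L M)) psi c blen ltac:(lra) Hc0
    (Hpos (Hn L) (fun M _ => Nat.le_refl _)) Hn_block_scaled_cv e He) as [M1 [_ HM1]].
  destruct (ln_scaled_asymptotics (fun M => INR (Hn L (S M))) psi (c * psi) blen ltac:(lra)
    ltac:(nra) (Hpos (fun M => Hn L (S M)) (fun M _ => Nat.lt_le_incl _ _ (Hn_lt_S L M Hadm ltac:(unfold blen in *; lia))))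
    Hn_S_block_scaled_cv e He) as [M2 [_ HM2]].
  destruct (ln_scaled_asymptotics (fun M => INR (Hval L b (M - blen))) psi (c * dotH (/ psi) b) blen
    ltac:(lra) ltac:(nra) (Hpos _ (fun M HM => proj1 (block_values_between M HM)))
    (block_scaled_cv b Lb) e He) as [M3 [_ HM3]].
  destruct (ln_scaled_asymptotics (fun M => INR (Hval L b' (M - blen))) psi (c * dotH (/ psi) b') blen
    ltac:(lra) ltac:(nra)
    (Hpos _ (fun M HM => Nat.le_trans _ _ _ (proj1 (block_values_between M HM))
                                             (proj1 (proj2 (block_values_between M HM)))))
    (block_scaled_cv b' Lb') e He) as [M4 [_ HM4]].
  exists (Nat.max blen (Nat.max (Nat.max M1 M2) (Nat.max M3 M4))). split; [lia|].
  intros M HM. repeat split; [apply HM1|apply HM2|apply HM3|apply HM4]; lia.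
Qed.

Lemma LB_ln_window e M0 m : block_regime e M0 -> (Hn L M0 <= m)%nat -> LB L s m b ->
  exists M : nat, INR M * ln psi + ln (dotH (/ psi) b) - e < ln (INR m) - ln c <
                  INR M * ln psi + ln (dotH (/ psi) b') + e.
Proof.
  intros [HM0 Hreg] Hm [eps [[[Hc Hh] Hv] [Hs E]]].
  apply Hcirc_iff in Hc. rewrite Hvalue_Hval in Hv. subst m.
  destruct block_lengths as [Lb Lb']. destruct dotH_block_bounds as [[Hdb Hdb'] _].
  assert (HM : (M0 <= length eps)%nat) by (apply (Hcirc_from_length_ge L); auto; unfold blen in *; lia).
  destruct (lead_block_window L s b b' Hadm Hs1 Hsucc eps Hc ltac:(unfold blen in *; lia)
    ltac:(now rewrite E)) as [W1 W2].
  rewrite Lb in W1. rewrite Lb' in W2. fold blen in W1, W2.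
  destruct (Hreg (length eps) HM) as [_ [_ [R3 R4]]].
  pose proof (block_values_between (length eps) ltac:(lia)) as [B1 _].
  pose proof (Hn_ge L (length eps) Hadm).
  assert (ln (INR (Hval L b (length eps - blen))) <= ln (INR (Hval L eps 0)))
    by (apply ln_le_pos; [apply (lt_INR 0); unfold blen in *; lia|apply le_INR; lia]).
  assert (ln (INR (Hval L eps 0)) < ln (INR (Hval L b' (length eps - blen))))
    by (apply ln_increasing; [apply (lt_INR 0); unfold blen in *; lia|apply lt_INR; lia]).
  rewrite ln_mult in R3, R4 by lra. apply Rabs_def2 in R3, R4.
  exists (length eps). lra.
Qed.

Lemma ln_window_LB e M0 m (z : Z) : block_regime e M0 -> (1 <= m)%nat -> (Hn L M0 <= m)%nat ->
  IZR z * ln psi + ln (dotH (/ psi) b) + e <= ln (INR m) - ln c <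
  IZR z * ln psi + ln (dotH (/ psi) b') - e ->
  LB L s m b.
Proof.
  intros [HM0 Hreg] Hm1 Hm [Z1 Z2]. assert (HN : (2 <= length L)%nat) by apply Hadm.
  pose proof (psi_gt1 L psi Hadm Hpsi) as Hp1.
  assert (Hlp : 0 < ln psi) by (rewrite <- ln_1; apply ln_increasing; lra).
  destruct block_lengths as [Lb Lb']. destruct dotH_block_bounds as [[Hdb Hdb'] Hdb''].
  assert (Hl0 : 0 <= ln (dotH (/ psi) b)) by (rewrite <- ln_1; apply ln_le_pos; lra).
  assert (Hl1 : ln (dotH (/ psi) b') <= ln psi) by (apply ln_le_pos; lra).
  destruct (H_expansion_exists L m Hadm Hm1) as [w [Hw [Hh [Hv HHl]]]].
  set (M := length w) in *.
  assert (HM : (M0 <= M)%nat) by (apply (Hcirc_from_length_ge L); auto; unfold blen in *; lia).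
  pose proof (Hval_lt_Hn L w HN Hw) as Hup. fold M in Hup. rewrite Hv in Hup.
  destruct (Hreg M HM) as [R1 [R2 [R3 R4]]].
  rewrite ln_mult in R2, R3, R4 by lra. apply Rabs_def2 in R1, R2, R3, R4.
  pose proof (Hn_ge L M Hadm). pose proof (block_values_between M ltac:(lia)) as [B1 [B2 B3]].
  assert (Hpos : forall k : nat, (1 <= k)%nat -> 0 < INR k) by (intros k Hk; apply (lt_INR 0); lia).
  assert (ln (INR (Hn L M)) <= ln (INR m)) by (apply ln_le_pos; [apply Hpos; unfold blen in *; lia|apply le_INR; lia]).
  assert (ln (INR m) < ln (INR (Hn L (S M)))) by (apply ln_increasing; [apply Hpos; lia|apply lt_INR; lia]).
  assert (Ez : IZR z = INR M).
  { apply IZR_eq_INR_of_close; apply (Rmult_lt_reg_r (ln psi)); auto; nra. }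
  rewrite Ez in Z1, Z2.
  assert (Lo : (Hval L b (M - blen) <= m)%nat).
  { destruct (Nat.le_gt_cases (Hval L b (M - blen)) m) as [H'|H']; auto. exfalso.
    assert (ln (INR m) < ln (INR (Hval L b (M - blen))))
      by (apply ln_increasing; [apply Hpos; lia|apply lt_INR; lia]). lra. }
  assert (Up : (m < Hval L b' (M - blen))%nat).
  { destruct (Nat.lt_ge_cases m (Hval L b' (M - blen))) as [H'|H']; auto. exfalso.
    assert (ln (INR (Hval L b' (M - blen))) <= ln (INR m))
      by (apply ln_le_pos; [apply Hpos; unfold blen in *; lia|apply le_INR; lia]). lra. }
  assert (Hbl : lead_block L s w = b).
  { apply (lead_block_of_window L s b b' Hadm Hs1 Hb Hsucc w Hw Hh ltac:(unfold blen in *; lia)).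
    fold M. rewrite Lb, Lb', Hv. fold blen. lia. }
  exists w. repeat split; auto.
  - apply Hcirc_iff; auto.
  - rewrite Hvalue_Hval; auto.
  - unfold blen in *; lia.
Qed.

Variables (g : R).
Hypotheses (Hg : 1 < g) (Hirr : irrational (ln g / ln psi)).

Lemma LB_floor_pow_approx eps : 0 < eps -> exists n1, forall n, (n1 <= n)%nat ->
  let x := (INR n * ln g - ln c) / ln psi in
  let u := ln (dotH (/ psi) b) / ln psi in
  let v := ln (dotH (/ psi) b') / ln psi in
  (LB L s (floor_nat (g ^ n)) b -> exists z : Z, IZR z + u - eps <= x < IZR z + v + eps) /\
  ((exists z : Z, IZR z + u + eps <= x < IZR z + v - eps) -> LB L s (floor_nat (g ^ n)) b).
Proof.
  intros Heps. pose proof (psi_gt1 L psi Hadm Hpsi) as Hp1.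
  assert (Hlp : 0 < ln psi) by (rewrite <- ln_1; apply ln_increasing; lra).
  set (e := eps * ln psi / 2). assert (He : 0 < e) by (unfold e; nra).
  destruct (block_regime_exists e He) as [M0 HM0].
  destruct (ln_floor_pow_asymptotics g Hg e He) as [n2 Hn2].
  destruct (floor_pow_unbounded g (Hn L M0) Hg) as [n3 Hn3].
  exists (Nat.max n2 n3). intros n Hn x u v.
  specialize (Hn2 n ltac:(lia)). unfold R_dist in Hn2. rewrite Rminus_0_r in Hn2.
  apply Rabs_def2 in Hn2. specialize (Hn3 n ltac:(lia)).
  assert (Ex : x * ln psi = INR n * ln g - ln c) by (unfold x; field; lra).
  assert (Eu : u * ln psi = ln (dotH (/ psi) b)) by (unfold u; field; lra).
  assert (Ev : v * ln psi = ln (dotH (/ psi) b')) by (unfold v; field; lra).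
  assert (He2 : 2 * e = eps * ln psi) by (unfold e; field).
  split.
  - intros HLB. destruct (LB_ln_window e M0 _ HM0 Hn3 HLB) as [M HM].
    exists (Z.of_nat M). rewrite <- INR_IZR_INZ. split.
    + apply (Rmult_le_reg_r (ln psi)); auto. nra.
    + apply (Rmult_lt_reg_r (ln psi)); auto. nra.
  - intros [z [Z1 Z2]]. apply (ln_window_LB e M0 _ z HM0 (floor_pow_ge1 g n Hg) Hn3).
    apply (Rmult_le_compat_r (ln psi)) in Z1; [|lra].
    apply (Rmult_lt_compat_r (ln psi)) in Z2; [|lra].
    split; nra.
Qed.

Lemma count_LB_floor_pow_cv :
  Un_cv (fun n => INR (count_LB L s b (fun n => floor_nat (g ^ n)) n) / INR n)
        (ln (dotH (/ psi) b') / ln psi - ln (dotH (/ psi) b) / ln psi).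
Proof.
  set (u := ln (dotH (/ psi) b) / ln psi). set (v := ln (dotH (/ psi) b') / ln psi).
  set (alpha := ln g / ln psi). set (beta := - ln c / ln psi).
  pose proof (psi_gt1 L psi Hadm Hpsi) as Hp1.
  assert (Hlp : 0 < ln psi) by (rewrite <- ln_1; apply ln_increasing; lra).
  assert (Hx : forall n : nat, (INR n * ln g - ln c) / ln psi = INR n * alpha + beta)
    by (intros; unfold alpha, beta; field; lra).
  set (A := fun k => indR (LB L s (floor_nat (g ^ S k)) b)).
  apply (Un_cv_ext (fun n => sum_below A n / INR n)).
  { intros n. f_equal. unfold count_LB. rewrite sumR_INR. unfold sum_below, A, indR.
    rewrite <- seq_shift, map_map. reflexivity. }
  apply density_squeeze; [intros k; apply indR_range|].
  intros e He. destruct (LB_floor_pow_approx (e / 2) ltac:(lra)) as [n1 Hn1].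
  set (lmin := Rmax 0 (v - u - e)). set (lmax := Rmin 1 (v - u + e)).
  destruct ln_dotH_ratio_bounds as [[Hu Huv] Hv]. fold u v in Hu, Huv, Hv.
  assert (Hlmin : 0 <= lmin <= 1) by (unfold lmin, Rmax; destruct (Rle_dec 0 (v - u - e)); lra).
  assert (Hlmax : 0 <= lmax <= 1) by (unfold lmax, Rmin; destruct (Rle_dec 1 (v - u + e)); lra).
  exists (fun k => indR (frac_part (INR k * alpha + (beta + alpha - (u + e / 2))) < lmin)),
         (fun k => indR (frac_part (INR k * alpha + (beta + alpha - (u - e / 2))) < lmax)),
         n1, lmin, lmax.
  split; [|split; [|split; [|split; [|split]]]].
  - intros k Hk. destruct (Hn1 (S k) ltac:(lia)) as [Hi Hii]. rewrite Hx, S_INR in Hi, Hii. fold u v in Hi, Hii. split.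
    + apply indR_le. intros Hf. unfold A. apply Hii.
      apply frac_lt_Rmax0, frac_lt_iff_near_int in Hf. destruct Hf as [z Hz].
      exists z. lra.
    + apply indR_le. intros HL. destruct (Hi HL) as [z Hz].
      apply (frac_lt_Rmin1 _ (v - u + e)); [lra|]. apply frac_lt_iff_near_int.
      exists z. lra.
  - intros k. split; apply indR_range.
  - apply (rot_count_cv alpha (beta + alpha - (u + e / 2)) lmin Hirr Hlmin).
  - apply (rot_count_cv alpha (beta + alpha - (u - e / 2)) lmax Hirr Hlmax).
  - apply Rmax_r.
  - apply Rmin_r.
Qed.

End BlockAsymptotics.

Theorem theorem6p16 (gamma : R) :
  (1 < gamma)%R ->
  (forall (L : list nat) (psi : R) (r : Q),
      admissible L -> is_psi L psi -> gamma <> Rpower psi (Q2R r)) ->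
  absolute_benford (fun n => floor_nat (gamma ^ n)%R).
Proof.
  intros Hg Hnr L psi Hadm Hpsi s b b' Hs1 Hb Hsucc.
  destruct (Hscaled_cv L psi Hadm Hpsi) as [c [Hc0 Hcv]].
  pose proof (ln_ratio_irrational gamma L psi Hg Hadm Hpsi (fun r => Hnr L psi r Hadm Hpsi)) as Hirr.
  destruct (dotH_block_bounds L psi c s b b' Hadm Hpsi Hc0 Hcv Hs1 Hb Hsucc) as [[Hdb Hdb'] _].
  pose proof (psi_gt1 L psi Hadm Hpsi).
  assert (0 < ln psi) by (rewrite <- ln_1; apply ln_increasing; lra).
  replace (log_base psi (dotH (/ psi) b' / dotH (/ psi) b))
    with (ln (dotH (/ psi) b') / ln psi - ln (dotH (/ psi) b) / ln psi).
  - apply (count_LB_floor_pow_cv L psi c s b b'); auto.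
  - unfold log_base, Rdiv. rewrite ln_mult, ln_Rinv by (try apply Rinv_0_lt_compat; lra). field. lra.
Qed.
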